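(* Let $\tau\in\mathcal{H}$ with $\Im(\tau)\ge\sqrt3/4$, let $z\in\mathbb{C}$ with $0\le\Im(z)\le\Im(\tau)/4$, and let $\lambda,\mu\in\mathbb{C}\setminus\{0\}$. Then $F^\infty$ is defined at the given point and $$F^{\infty}\left(\lambda\theta_{00}^2(z,\tau),\ \lambda\theta_{01}^2(z,\tau),\ \mu\theta_{00}^2(0,\tau),\ \mu\theta_{01}^2(0,\tau)\right)=(\lambda,\mu).$$ In particular $$F^{\infty}\left(1,\frac{\theta_{01}^2(z,\tau)}{\theta_{00}^2(z,\tau)},1,\frac{\theta_{01}^2(0,\tau)}{\theta_{00}^2(0,\tau)}\right)=\left(\frac{1}{\theta_{00}^2(z,\tau)},\frac{1}{\theta_{00}^2(0,\tau)}\right).$$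
   Context: For $z\in\mathbb{C}$ and $\tau$ in the upper half-plane $\mathcal{H}=\{\tau\in\mathbb{C}:\Im\tau>0\}$, $\theta(z,\tau)=\sum_{n\in\mathbb{Z}}\exp(\pi i\tau n^2+2\pi i n z)$; $\theta_{00}(z,\tau)=\theta(z,\tau)$, $\theta_{01}(z,\tau)=\theta(z+\tfrac12,\tau)$. Optimal F sequence: given $(x_0,y_0,z_0,t_0)\in\mathbb{C}^4$, define recursively $$(x_{n+1},y_{n+1},z_{n+1},t_{n+1})=\Big(\tfrac{\sqrt{x_n}\sqrt{z_n}+\sqrt{y_n}\sqrt{t_n}}{2},\ \tfrac{\sqrt{x_n}\sqrt{t_n}+\sqrt{y_n}\sqrt{z_n}}{2},\ \tfrac{z_n+t_n}{2},\ \sqrt{z_n}\sqrt{t_n}\Big),$$ with square roots chosen ''good'': $\Re\sqrt{x_n}\ge0$, $\Re\sqrt{z_n}\ge0$; either $|\sqrt{x_n}-\sqrt{y_n}|<|\sqrt{x_n}+\sqrt{y_n}|$ or equality and $\Im(\sqrt{y_n}/\sqrt{x_n})>0$; either $|\sqrt{z_n}-\sqrt{t_n}|<|\sqrt{z_n}+\sqrt{t_n}|$ or equality and $\Im(\sqrt{t_n}/\sqrt{z_n})>0$. When $z_\infty=\lim_n z_n$ exists and is nonzero and $\lim_n(x_n/z_\infty)^{2^n}$ exists, set $F^\infty(x_0,y_0,z_0,t_0)=\big(z_\infty\lim_n(x_n/z_\infty)^{2^n},\ z_\infty\big)$. *)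

From Stdlib Require Import Reals ZArith ClassicalEpsilon.
Open Scope R_scope.

Record Cplx : Type := mkC { Re : R; Im : R }.

Definition RtoC (a : R) : Cplx := mkC a 0.
Definition Czero : Cplx := RtoC 0.
Definition Cone : Cplx := RtoC 1.
Definition Ci : Cplx := mkC 0 1.
Definition Cadd (u v : Cplx) : Cplx := mkC (Re u + Re v) (Im u + Im v).
Definition Copp (u : Cplx) : Cplx := mkC (- Re u) (- Im u).
Definition Csub (u v : Cplx) : Cplx := Cadd u (Copp v).
Definition Cmul (u v : Cplx) : Cplx :=
  mkC (Re u * Re v - Im u * Im v) (Re u * Im v + Im u * Re v).
Definition Cinv (u : Cplx) : Cplx :=
  mkC (Re u / (Re u ^ 2 + Im u ^ 2)) (- Im u / (Re u ^ 2 + Im u ^ 2)).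
Definition Cdiv (u v : Cplx) : Cplx := Cmul u (Cinv v).
Definition Cnorm (u : Cplx) : R := sqrt (Re u ^ 2 + Im u ^ 2).
Fixpoint Cpow (u : Cplx) (n : nat) : Cplx :=
  match n with O => Cone | S m => Cmul u (Cpow u m) end.
Definition Cexp (u : Cplx) : Cplx := mkC (exp (Re u) * cos (Im u)) (exp (Re u) * sin (Im u)).

Definition Ccv (u : nat -> Cplx) (l : Cplx) : Prop :=
  forall eps : R, eps > 0 -> exists N : nat, forall n : nat, (n >= N)%nat ->
    Cnorm (Csub (u n) l) < eps.

Definition Cinhabited : inhabited Cplx := inhabits Czero.
Definition Clim (u : nat -> Cplx) : Cplx := epsilon Cinhabited (fun l => Ccv u l).

Fixpoint Csum (f : nat -> Cplx) (m : nat) : Cplx :=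
  match m with O => Czero | S k => Cadd (Csum f k) (f k) end.

Definition theta_term (z tau : Cplx) (n : Z) : Cplx :=
  Cexp (Cadd (Cmul (RtoC (PI * IZR n ^ 2)) (Cmul Ci tau))
             (Cmul (RtoC (2 * PI * IZR n)) (Cmul Ci z))).

(* symmetric partial sums  sum_{n=-N}^{N} *)
Definition theta_psum (z tau : Cplx) (N : nat) : Cplx :=
  Csum (fun k => theta_term z tau (Z.of_nat k - Z.of_nat N)%Z) (2 * N + 1).

Definition theta (z tau : Cplx) : Cplx := Clim (theta_psum z tau).
Definition theta00 (z tau : Cplx) : Cplx := theta z tau.
Definition theta01 (z tau : Cplx) : Cplx := theta (Cadd z (RtoC (1/2))) tau.

Definition good_pair (a b sa sb : Cplx) : Prop :=
  Cmul sa sa = a /\ Cmul sb sb = b /\ Re sa >= 0 /\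
  (Cnorm (Csub sa sb) < Cnorm (Cadd sa sb) \/
   (Cnorm (Csub sa sb) = Cnorm (Cadd sa sb) /\ Im (Cdiv sb sa) > 0)).

Definition half (u : Cplx) : Cplx := Cdiv u (RtoC 2).

Definition good_step (x y z t x' y' z' t' : Cplx) : Prop :=
  exists sx sy sz st : Cplx,
    good_pair x y sx sy /\ good_pair z t sz st /\
    x' = half (Cadd (Cmul sx sz) (Cmul sy st)) /\
    y' = half (Cadd (Cmul sx st) (Cmul sy sz)) /\
    z' = half (Cadd z t) /\
    t' = Cmul sz st.

Definition good_F_seq (x0 y0 z0 t0 : Cplx) (x y z t : nat -> Cplx) : Prop :=
  x 0%nat = x0 /\ y 0%nat = y0 /\ z 0%nat = z0 /\ t 0%nat = t0 /\
  forall n : nat, good_step (x n) (y n) (z n) (t n)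
                            (x (S n)) (y (S n)) (z (S n)) (t (S n)).

Definition Finf_eq (x0 y0 z0 t0 a b : Cplx) : Prop :=
  (exists x y z t : nat -> Cplx, good_F_seq x0 y0 z0 t0 x y z t) /\
  forall x y z t : nat -> Cplx, good_F_seq x0 y0 z0 t0 x y z t ->
    exists zinf L : Cplx,
      Ccv z zinf /\ zinf <> Czero /\
      Ccv (fun n => Cpow (Cdiv (x n) zinf) (2 ^ n)) L /\
      a = Cmul zinf L /\ b = zinf.

(** Write the point as (λA², λB², μA₀², μB₀²) with A = θ00(z,τ), B = θ01(z,τ), A₀ = θ00(0,τ),
    B₀ = θ01(0,τ). The duplication formulas
      θ00(z,τ)θ00(0,τ) + θ01(z,τ)θ01(0,τ) = 2 θ00(z,2τ)²,
      θ00(z,τ)θ01(0,τ) + θ01(z,τ)θ00(0,τ) = 2 θ01(z,2τ)²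
    show that one step of the F sequence produces a point of the same shape for 2τ, with μ unchanged
    and λ replaced by some c with c² = λμ, provided the good square roots are the ones
    proportional to (A, B) and (A₀, B₀). This holds because |θ00 - θ01| < |θ00 + θ01| as soon as
    Im τ ≥ √3/4, which is an estimate on the first few terms of the theta series. Since
    c_n^(2ⁿ) μ = λ μ^(2ⁿ), we get z_n = μ θ00(0,2ⁿτ)² and (x_n/μ)^(2ⁿ) = (λ/μ) θ00(z,2ⁿτ)^(2ⁿ⁺¹),
    and both tend to their limits
    because θ00(w,2ⁿτ) - 1 decays like exp(-π 2ⁿ Im τ / 2). *)

From Stdlib Require Import Reals ZArith Lra Lia Psatz Field Ring ClassicalEpsilon.
Open Scope R_scope.

(** * Complex arithmetic *)

Lemma Cplx_ext (u v : Cplx) : Re u = Re v -> Im u = Im v -> u = v.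
Proof. destruct u, v; simpl; intros; subst; auto. Qed.

Lemma Cplx_ring : ring_theory Czero Cone Cadd Cmul Csub Copp (@eq Cplx).
Proof.
  constructor; intros; apply Cplx_ext; destruct x; try destruct y; try destruct z;
  unfold Cadd, Cmul, Csub, Copp, Czero, Cone, RtoC; simpl; ring.
Qed.
Add Ring Cplx_ring : Cplx_ring.

Lemma Cplx_field : field_theory Czero Cone Cadd Cmul Csub Copp Cdiv Cinv (@eq Cplx).
Proof.
  constructor.
  - exact Cplx_ring.
  - intro H. injection H. lra.
  - reflexivity.
  - intros [a b] Hp.
    assert (a ^ 2 + b ^ 2 <> 0).
    { intro H. apply Hp. assert (a = 0) by nra. assert (b = 0) by nra. subst. reflexivity. }
    apply Cplx_ext; unfold Cmul, Cinv, Cone, RtoC; simpl; field; nra.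
Qed.
Add Field Cplx_field : Cplx_field.

Lemma RtoC_2_neq0 : RtoC 2 <> Czero.
Proof. intro H; injection H; lra. Qed.

Lemma Cone_neq0 : Cone <> Czero.
Proof. intro H; injection H; lra. Qed.

Lemma Cnorm_ge0 u : 0 <= Cnorm u.
Proof. unfold Cnorm. apply sqrt_pos. Qed.

Lemma Cnorm_sq u : Cnorm u * Cnorm u = Re u ^ 2 + Im u ^ 2.
Proof. unfold Cnorm. apply sqrt_sqrt. nra. Qed.

Lemma Cnorm_mul u v : Cnorm (Cmul u v) = Cnorm u * Cnorm v.
Proof.
  unfold Cnorm. rewrite <- sqrt_mult by nra. f_equal.
  destruct u, v; simpl. ring.
Qed.

Lemma Cnorm_eq0 u : Cnorm u = 0 -> u = Czero.
Proof.
  intro H. pose proof (Cnorm_sq u) as E. rewrite H in E.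
  destruct u as [a b]; simpl in *. assert (a = 0) by nra. assert (b = 0) by nra.
  subst; reflexivity.
Qed.

Lemma Cnorm_pos u : u <> Czero -> 0 < Cnorm u.
Proof.
  intro H. destruct (Cnorm_ge0 u) as [h|h]; auto.
  exfalso; apply H, Cnorm_eq0; auto.
Qed.

Lemma Cnorm_le_of_sq u r : 0 <= r -> Re u ^ 2 + Im u ^ 2 <= r * r -> Cnorm u <= r.
Proof.
  intros Hr H. unfold Cnorm. rewrite <- (sqrt_square r) by lra. apply sqrt_le_1; nra.
Qed.

Lemma Cnorm_triang u v : Cnorm (Cadd u v) <= Cnorm u + Cnorm v.
Proof.
  pose proof (Cnorm_ge0 u); pose proof (Cnorm_ge0 v).
  apply Cnorm_le_of_sq; [lra|].
  pose proof (Cnorm_sq u) as Hu. pose proof (Cnorm_sq v) as Hv.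
  destruct u as [a b], v as [c d]; unfold Cadd in *; cbn [Re Im] in *.
  set (p := Cnorm {| Re := a; Im := b |}) in *. set (q := Cnorm {| Re := c; Im := d |}) in *.
  assert (Cauchy_Schwarz : a * c + b * d <= p * q).
  { assert (E : (p * q) ^ 2 = (a ^ 2 + b ^ 2) * (c ^ 2 + d ^ 2)) by (rewrite <- Hu, <- Hv; ring).
    assert ((a * c + b * d) ^ 2 <= (p * q) ^ 2)
      by (rewrite E; pose proof (pow2_ge_0 (a * d - b * c)); nra).
    destruct (Rle_dec (a * c + b * d) 0); [nra|].
    apply Rsqr_incr_0_var; unfold Rsqr; nra. }
  nra.
Qed.

Lemma Cnorm_opp u : Cnorm (Copp u) = Cnorm u.
Proof. unfold Cnorm; destruct u; simpl; f_equal; ring. Qed.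

Lemma Cnorm_sub_sym u v : Cnorm (Csub u v) = Cnorm (Csub v u).
Proof. replace (Csub u v) with (Copp (Csub v u)) by ring. apply Cnorm_opp. Qed.

Lemma Cnorm_triang_sub u v : Cnorm (Csub u v) <= Cnorm u + Cnorm v.
Proof. unfold Csub. rewrite <- (Cnorm_opp v). apply Cnorm_triang. Qed.

Lemma Cnorm_triang_rev u v : Cnorm u - Cnorm v <= Cnorm (Cadd u v).
Proof.
  pose proof (Cnorm_triang (Cadd u v) (Copp v)) as H. rewrite Cnorm_opp in H.
  replace (Cadd (Cadd u v) (Copp v)) with u in H by ring. lra.
Qed.

Lemma Cnorm_RtoC a : Cnorm (RtoC a) = Rabs a.
Proof. unfold Cnorm, RtoC; simpl. rewrite <- sqrt_Rsqr_abs. f_equal. unfold Rsqr. ring. Qed.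

Lemma Cnorm_Czero : Cnorm Czero = 0.
Proof. unfold Czero. rewrite Cnorm_RtoC. apply Rabs_R0. Qed.

Lemma Cnorm_Cone : Cnorm Cone = 1.
Proof. unfold Cone. rewrite Cnorm_RtoC. apply Rabs_R1. Qed.

Lemma Rabs_Re_le u : Rabs (Re u) <= Cnorm u.
Proof.
  rewrite <- (sqrt_Rsqr_abs (Re u)). unfold Cnorm. apply sqrt_le_1; unfold Rsqr; nra.
Qed.

Lemma Rabs_Im_le u : Rabs (Im u) <= Cnorm u.
Proof.
  rewrite <- (sqrt_Rsqr_abs (Im u)). unfold Cnorm. apply sqrt_le_1; unfold Rsqr; nra.
Qed.

Lemma Cnorm_le_Rabs_Re_Im u : Cnorm u <= Rabs (Re u) + Rabs (Im u).
Proof.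
  pose proof (Rabs_pos (Re u)); pose proof (Rabs_pos (Im u)).
  apply Cnorm_le_of_sq; [lra|].
  pose proof (Rsqr_abs (Re u)); pose proof (Rsqr_abs (Im u)). unfold Rsqr in *. nra.
Qed.

Lemma Cnorm_inv u : u <> Czero -> Cnorm (Cinv u) = / Cnorm u.
Proof.
  intro H. pose proof (Cnorm_pos u H).
  assert (E : Cnorm (Cmul (Cinv u) u) = 1).
  { replace (Cmul (Cinv u) u) with Cone by (field; auto). apply Cnorm_Cone. }
  rewrite Cnorm_mul in E. field_simplify_eq; lra.
Qed.

Lemma Cnorm_div u v : v <> Czero -> Cnorm (Cdiv u v) = Cnorm u / Cnorm v.
Proof. intro H. unfold Cdiv. rewrite Cnorm_mul, Cnorm_inv; auto. Qed.

Lemma Cmul_eq0 u v : Cmul u v = Czero -> u = Czero \/ v = Czero.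
Proof.
  intro H. assert (Cnorm u * Cnorm v = 0) by (rewrite <- Cnorm_mul, H; apply Cnorm_Czero).
  destruct (Rmult_integral _ _ H0); [left|right]; apply Cnorm_eq0; auto.
Qed.

Lemma Cmul_neq0 u v : u <> Czero -> v <> Czero -> Cmul u v <> Czero.
Proof. intros A B C. destruct (Cmul_eq0 _ _ C); auto. Qed.

Lemma Cinv_neq0 u : u <> Czero -> Cinv u <> Czero.
Proof.
  intros H E. apply Cone_neq0.
  replace Cone with (Cmul (Cinv u) u) by (field; auto). rewrite E. ring.
Qed.

Lemma Csqrt_neq0 s a : Cmul s s = a -> a <> Czero -> s <> Czero.
Proof. intros E Ha Hs. apply Ha. rewrite <- E, Hs. ring. Qed.

Lemma Csqr_eq_cases a b : Cmul a a = Cmul b b -> a = b \/ a = Copp b.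
Proof.
  intro H. assert (Cmul (Csub a b) (Cadd a b) = Czero).
  { replace (Cmul (Csub a b) (Cadd a b)) with (Csub (Cmul a a) (Cmul b b)) by ring.
    rewrite H. ring. }
  destruct (Cmul_eq0 _ _ H0) as [E|E]; [left|right].
  - replace a with (Cadd (Csub a b) b) by ring. rewrite E. ring.
  - replace a with (Csub (Cadd a b) b) by ring. rewrite E. ring.
Qed.

Lemma Cexp_add u v : Cexp (Cadd u v) = Cmul (Cexp u) (Cexp v).
Proof.
  apply Cplx_ext; unfold Cexp, Cadd, Cmul; simpl; rewrite exp_plus, ?cos_plus, ?sin_plus; ring.
Qed.

Lemma Cnorm_Cexp u : Cnorm (Cexp u) = exp (Re u).
Proof.
  unfold Cnorm, Cexp; cbn [Re Im].
  replace ((exp (Re u) * cos (Im u)) ^ 2 + (exp (Re u) * sin (Im u)) ^ 2)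
    with (exp (Re u) * exp (Re u)).
  - apply sqrt_square. left; apply exp_pos.
  - pose proof (sin2_cos2 (Im u)). unfold Rsqr in H. nra.
Qed.

Lemma Cpow_mul u v n : Cpow (Cmul u v) n = Cmul (Cpow u n) (Cpow v n).
Proof. induction n; simpl. unfold Cone; apply Cplx_ext; simpl; ring. rewrite IHn. ring. Qed.

Lemma Cpow_add u a b : Cpow u (a + b) = Cmul (Cpow u a) (Cpow u b).
Proof. induction a; simpl. ring. rewrite IHa. ring. Qed.

Lemma Cpow_pow u a b : Cpow (Cpow u a) b = Cpow u (a * b).
Proof.
  induction b; simpl.
  - rewrite Nat.mul_0_r. auto.
  - rewrite IHb, Nat.mul_succ_r, Nat.add_comm, Cpow_add. auto.
Qed.

Lemma Cpow_Cone n : Cpow Cone n = Cone.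
Proof. induction n; simpl; auto. rewrite IHn. ring. Qed.

Lemma Cpow_2 u : Cpow u 2 = Cmul u u.
Proof. simpl. ring. Qed.

Lemma Cpow_neq0 u n : u <> Czero -> Cpow u n <> Czero.
Proof. intro H; induction n; simpl. apply Cone_neq0. apply Cmul_neq0; auto. Qed.

Lemma Cnorm_Cpow_sub1 u M :
  Cnorm (Csub (Cpow u M) Cone) <= (1 + Cnorm (Csub u Cone)) ^ M - 1.
Proof.
  induction M; simpl.
  - replace (Csub Cone Cone) with Czero by ring. rewrite Cnorm_Czero. lra.
  - replace (Csub (Cmul u (Cpow u M)) Cone)
      with (Cadd (Cmul u (Csub (Cpow u M) Cone)) (Csub u Cone)) by ring.
    eapply Rle_trans. apply Cnorm_triang. rewrite Cnorm_mul.
    set (e := Cnorm (Csub u Cone)).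
    assert (Cnorm u <= 1 + e).
    { pose proof (Cnorm_triang (Csub u Cone) Cone) as H.
      replace (Cadd (Csub u Cone) Cone) with u in H by ring. rewrite Cnorm_Cone in H.
      unfold e; lra. }
    pose proof (Cnorm_ge0 u). pose proof (Cnorm_ge0 (Csub (Cpow u M) Cone)).
    apply Rle_trans with ((1 + e) * ((1 + e) ^ M - 1) + e); [|lra].
    apply Rplus_le_compat_r. apply Rmult_le_compat; auto.
Qed.

Definition sgn_nonneg (y : R) : R := if Rlt_dec y 0 then -1 else 1.

Definition Csqrt (a : Cplx) : Cplx :=
  mkC (sqrt ((Cnorm a + Re a) / 2)) (sgn_nonneg (Im a) * sqrt ((Cnorm a - Re a) / 2)).

Lemma Csqrt_sqr a : Cmul (Csqrt a) (Csqrt a) = a.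
Proof.
  pose proof (Rabs_Re_le a) as H1. pose proof (Cnorm_sq a) as H2. pose proof (Cnorm_ge0 a).
  unfold Csqrt. set (r := Cnorm a) in *. destruct a as [u v]. cbn [Re Im] in *.
  assert (Hp : 0 <= (r + u) / 2) by (unfold Rabs in H1; destruct (Rcase_abs u); lra).
  assert (Hm : 0 <= (r - u) / 2) by (unfold Rabs in H1; destruct (Rcase_abs u); lra).
  assert (Hs : sgn_nonneg v * sgn_nonneg v = 1)
    by (unfold sgn_nonneg; destruct (Rlt_dec v 0); lra).
  assert (Hprod : sqrt ((r + u) / 2) * sqrt ((r - u) / 2) = Rabs v / 2).
  { rewrite <- sqrt_mult by auto.
    replace ((r + u) / 2 * ((r - u) / 2)) with (Rsqr (v / 2)) by (unfold Rsqr; field_simplify; nra).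
    rewrite sqrt_Rsqr_abs. unfold Rdiv. rewrite Rabs_mult, (Rabs_pos_eq (/ 2)) by lra. auto. }
  assert (Hv : sgn_nonneg v * Rabs v = v)
    by (unfold sgn_nonneg, Rabs; destruct (Rlt_dec v 0), (Rcase_abs v); lra).
  apply Cplx_ext; cbn [Cmul Re Im].
  - replace (sgn_nonneg v * sqrt ((r - u) / 2) * (sgn_nonneg v * sqrt ((r - u) / 2)))
      with ((sgn_nonneg v * sgn_nonneg v) * (sqrt ((r - u) / 2) * sqrt ((r - u) / 2))) by ring.
    rewrite Hs, !sqrt_sqrt by auto. field.
  - replace (sqrt ((r + u) / 2) * (sgn_nonneg v * sqrt ((r - u) / 2))
             + sgn_nonneg v * sqrt ((r - u) / 2) * sqrt ((r + u) / 2))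
      with (2 * sgn_nonneg v * (sqrt ((r + u) / 2) * sqrt ((r - u) / 2))) by ring.
    rewrite Hprod. lra.
Qed.

Lemma Csqrt_Re_ge0 a : Re (Csqrt a) >= 0.
Proof. unfold Csqrt; simpl. apply Rle_ge, sqrt_pos. Qed.

(** * Convergence *)

Lemma Ccv_unique u l1 l2 : Ccv u l1 -> Ccv u l2 -> l1 = l2.
Proof.
  intros H1 H2. destruct (Req_dec (Cnorm (Csub l1 l2)) 0) as [E|E].
  - apply Cnorm_eq0 in E. replace l1 with (Cadd (Csub l1 l2) l2) by ring. rewrite E. ring.
  - pose proof (Cnorm_ge0 (Csub l1 l2)).
    set (e := Cnorm (Csub l1 l2) / 2).
    destruct (H1 e) as [N1 HN1]; [unfold e; lra|]. destruct (H2 e) as [N2 HN2]; [unfold e; lra|].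
    set (N := max N1 N2).
    specialize (HN1 N ltac:(lia)). specialize (HN2 N ltac:(lia)).
    pose proof (Cnorm_triang_sub (Csub (u N) l2) (Csub (u N) l1)) as T.
    replace (Csub (Csub (u N) l2) (Csub (u N) l1)) with (Csub l1 l2) in T by ring.
    unfold e in *. lra.
Qed.

Lemma Clim_of_Ccv u l : Ccv u l -> Clim u = l.
Proof.
  intro H. apply (Ccv_unique u); auto.
  exact (epsilon_spec Cinhabited (fun l => Ccv u l) (ex_intro _ l H)).
Qed.

Lemma Ccv_of_bound_eventually u l (e : nat -> R) N0 :
  Un_cv e 0 -> (forall n, (n >= N0)%nat -> Cnorm (Csub (u n) l) <= e n) -> Ccv u l.
Proof.
  intros He Hb eps Heps. destruct (He eps Heps) as [N HN]. exists (max N N0). intros n Hn.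
  specialize (HN n ltac:(lia)). unfold R_dist in HN. rewrite Rminus_0_r in HN.
  specialize (Hb n ltac:(lia)). apply Rabs_def2 in HN. lra.
Qed.

Lemma Ccv_of_bound u l (e : nat -> R) :
  Un_cv e 0 -> (forall n, Cnorm (Csub (u n) l) <= e n) -> Ccv u l.
Proof. intros He Hb. apply (Ccv_of_bound_eventually u l e 0); auto. Qed.

Lemma Ccv_dist_le u l b B N0 :
  Ccv u l -> (forall n, (n >= N0)%nat -> Cnorm (Csub (u n) b) <= B) -> Cnorm (Csub l b) <= B.
Proof.
  intros H Hb. destruct (Rle_dec (Cnorm (Csub l b)) B) as [|n]; auto. exfalso.
  set (e := Cnorm (Csub l b) - B). destruct (H e) as [N HN]; [unfold e; lra|].
  set (M := max N N0). specialize (HN M ltac:(lia)). specialize (Hb M ltac:(lia)).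
  pose proof (Cnorm_triang_sub (Csub (u M) b) (Csub (u M) l)) as T.
  replace (Csub (Csub (u M) b) (Csub (u M) l)) with (Csub l b) in T by ring.
  unfold e in *. lra.
Qed.

Lemma Ccv_ext u v l : (forall n, u n = v n) -> Ccv u l -> Ccv v l.
Proof. intros E H eps He. destruct (H eps He) as [N HN]. exists N. intros. rewrite <- E; auto. Qed.

Lemma Ccv_subseq u l (f : nat -> nat) :
  (forall n, (f n >= n)%nat) -> Ccv u l -> Ccv (fun n => u (f n)) l.
Proof.
  intros Hf H eps He. destruct (H eps He) as [N HN]. exists N. intros.
  apply HN. specialize (Hf n). lia.
Qed.

Lemma Ccv_add u v a b : Ccv u a -> Ccv v b -> Ccv (fun n => Cadd (u n) (v n)) (Cadd a b).
Proof.
  intros Hu Hv eps He.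
  destruct (Hu (eps / 2)) as [N1 H1]; [lra|]. destruct (Hv (eps / 2)) as [N2 H2]; [lra|].
  exists (max N1 N2). intros n Hn. specialize (H1 n ltac:(lia)). specialize (H2 n ltac:(lia)).
  replace (Csub (Cadd (u n) (v n)) (Cadd a b)) with (Cadd (Csub (u n) a) (Csub (v n) b)) by ring.
  pose proof (Cnorm_triang (Csub (u n) a) (Csub (v n) b)). lra.
Qed.

Lemma Ccv_scal c u a : Ccv u a -> Ccv (fun n => Cmul c (u n)) (Cmul c a).
Proof.
  intros Hu eps He. pose proof (Cnorm_ge0 c).
  destruct (Hu (eps / (Cnorm c + 1))) as [N H1]; [apply Rdiv_lt_0_compat; lra|].
  exists N. intros n Hn. specialize (H1 n Hn).
  replace (Csub (Cmul c (u n)) (Cmul c a)) with (Cmul c (Csub (u n) a)) by ring.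
  rewrite Cnorm_mul. pose proof (Cnorm_ge0 (Csub (u n) a)).
  apply Rle_lt_trans with ((Cnorm c + 1) * Cnorm (Csub (u n) a)); [nra|].
  apply Rlt_le_trans with ((Cnorm c + 1) * (eps / (Cnorm c + 1))).
  - apply Rmult_lt_compat_l; lra.
  - right; field; lra.
Qed.

Lemma Ccv_scal_Cone c u : Ccv u Cone -> Ccv (fun n => Cmul c (u n)) c.
Proof.
  intro H. pose proof (Ccv_scal c u Cone H) as Hc.
  replace (Cmul c Cone) with c in Hc by ring. exact Hc.
Qed.


Lemma Ccv_of_cauchy u (e : nat -> R) :
  Un_cv e 0 -> (forall N M, (N <= M)%nat -> Cnorm (Csub (u M) (u N)) <= e N) ->
  exists l, Ccv u l.
Proof.
  intros He Hc.
  assert (Hcoord : forall f : Cplx -> R, (forall w, Rabs (f w) <= Cnorm w) ->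
            (forall a b, f (Csub a b) = f a - f b) -> Cauchy_crit (fun n => f (u n))).
  { intros f Hf Hs eps Heps. destruct (He eps Heps) as [N HN]. exists N. intros n m Hn Hm.
    unfold R_dist.
    assert (Hb : forall a b, (a >= N)%nat -> (a <= b)%nat -> Rabs (f (u b) - f (u a)) < eps).
    { intros a b Ha Hab. rewrite <- Hs. eapply Rle_lt_trans; [apply Hf|].
      eapply Rle_lt_trans; [apply Hc; auto|].
      specialize (HN a Ha). unfold R_dist in HN. rewrite Rminus_0_r in HN.
      apply Rabs_def2 in HN. lra. }
    destruct (Nat.le_ge_cases n m); [rewrite Rabs_minus_sym|]; apply Hb; auto. }
  destruct (R_complete _ (Hcoord Re Rabs_Re_le ltac:(reflexivity))) as [a Ha].
  destruct (R_complete _ (Hcoord Im Rabs_Im_le ltac:(reflexivity))) as [b Hb].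
  exists (mkC a b). intros eps Heps.
  destruct (Ha (eps / 2)) as [N1 H1]; [lra|]. destruct (Hb (eps / 2)) as [N2 H2]; [lra|].
  exists (max N1 N2). intros n Hn. specialize (H1 n ltac:(lia)). specialize (H2 n ltac:(lia)).
  unfold R_dist in *. eapply Rle_lt_trans; [apply Cnorm_le_Rabs_Re_Im|]. simpl.
  unfold Rminus in *. lra.
Qed.

Lemma pow_le_1 r n : 0 <= r <= 1 -> r ^ n <= 1.
Proof. intro H; induction n; simpl. lra. pose proof (pow_le r n ltac:(lra)). nra. Qed.

Lemma pow_le_pow_le1 r a b : 0 <= r <= 1 -> (a <= b)%nat -> r ^ b <= r ^ a.
Proof.
  intros Hr Hab. replace b with (a + (b - a))%nat by lia. rewrite pow_add.
  pose proof (pow_le r a ltac:(lra)). pose proof (pow_le_1 r (b - a) Hr). nra.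
Qed.

Lemma Un_cv_geom K r : 0 <= r < 1 -> Un_cv (fun N => K * r ^ N) 0.
Proof.
  intros Hr eps He. destruct (Req_dec K 0) as [E|E].
  - exists O. intros. unfold R_dist. rewrite E, Rmult_0_l, Rminus_0_r, Rabs_R0. lra.
  - pose proof (Rabs_pos_lt K E).
    destruct (pow_lt_1_zero r ltac:(rewrite Rabs_pos_eq; lra) (eps / Rabs K)) as [N HN].
    { apply Rdiv_lt_0_compat; auto. }
    exists N. intros n Hn. specialize (HN n Hn). unfold R_dist. rewrite Rminus_0_r, Rabs_mult.
    apply Rlt_le_trans with (Rabs K * (eps / Rabs K)).
    + apply Rmult_lt_compat_l; auto.
    + right; field; lra.
Qed.

Lemma exp_le_1_plus_2x d : 0 <= d <= 1/2 -> exp d - 1 <= 2 * d.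
Proof.
  intro H. pose proof (exp_ineq1_le (- d)). rewrite exp_Ropp in H0.
  pose proof (exp_pos d).
  assert (exp d <= / (1 - d)).
  { apply Rmult_le_reg_l with (/ exp d); [apply Rinv_0_lt_compat; auto|].
    rewrite Rinv_l by lra. apply Rmult_le_reg_r with (1 - d); [lra|].
    rewrite Rmult_assoc, Rinv_l by lra. lra. }
  assert (/ (1 - d) <= 1 + 2 * d).
  { apply Rmult_le_reg_r with (1 - d); [lra|]. rewrite Rinv_l by lra. nra. }
  lra.
Qed.

Lemma exp_pow x k : exp x ^ k = exp (INR k * x).
Proof.
  induction k.
  - simpl. rewrite Rmult_0_l, exp_0. auto.
  - rewrite S_INR. simpl. rewrite IHk, <- exp_plus. f_equal. ring.
Qed.

Lemma exp_le x y : x <= y -> exp x <= exp y.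
Proof. intros [H|H]. left; apply exp_increasing; auto. subst; lra. Qed.

(* [u^M] stays close to 1 as long as [M |u - 1|] is small, since [(1 + e)^M <= exp (M e)]. *)
Lemma Ccv_Cpow_Cone (u : nat -> Cplx) (M : nat -> nat) (g : nat -> R) :
  Un_cv g 0 -> (forall n, (1 <= n)%nat -> INR (M n) * Cnorm (Csub (u n) Cone) <= g n) ->
  Ccv (fun n => Cpow (u n) (M n)) Cone.
Proof.
  intros Hg Hb. destruct (Hg (1/2) ltac:(lra)) as [N0 HN0].
  apply (Ccv_of_bound_eventually _ _ (fun n => 2 * g n) (max N0 1)).
  - intros eps He. destruct (Hg (eps / 2) ltac:(lra)) as [N HN]. exists N. intros n Hn.
    specialize (HN n Hn). unfold R_dist in *. rewrite Rminus_0_r in *.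
    rewrite Rabs_mult, Rabs_pos_eq by lra. lra.
  - intros n Hn. specialize (HN0 n ltac:(lia)). unfold R_dist in HN0.
    rewrite Rminus_0_r in HN0. apply Rabs_def2 in HN0. specialize (Hb n ltac:(lia)).
    pose proof (Cnorm_ge0 (Csub (u n) Cone)). set (e := Cnorm (Csub (u n) Cone)) in *.
    eapply Rle_trans; [apply Cnorm_Cpow_sub1|]. fold e.
    assert ((1 + e) ^ M n <= exp (INR (M n) * e)).
    { rewrite <- exp_pow. apply pow_incr. pose proof (exp_ineq1_le e). split; lra. }
    pose proof (pos_INR (M n)).
    assert (0 <= INR (M n) * e) by (apply Rmult_le_pos; lra).
    pose proof (exp_le_1_plus_2x (INR (M n) * e) ltac:(lra)). lra.
Qed.

(** * Bilateral series *)

Fixpoint bsum (u : Z -> Cplx) (N : nat) : Cplx :=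
  match N with
  | O => u 0%Z
  | S k => Cadd (Cadd (bsum u k) (u (Z.of_nat (S k)))) (u (- Z.of_nat (S k))%Z)
  end.

Fixpoint bsumR (u : Z -> R) (N : nat) : R :=
  match N with
  | O => u 0%Z
  | S k => bsumR u k + u (Z.of_nat (S k)) + u (- Z.of_nat (S k))%Z
  end.

Lemma bsum_S u k :
  bsum u (S k) = Cadd (Cadd (bsum u k) (u (Z.of_nat (S k)))) (u (- Z.of_nat (S k))%Z).
Proof. reflexivity. Qed.

Lemma bsum_ext u v N : (forall n, u n = v n) -> bsum u N = bsum v N.
Proof. intro E; induction N; cbn [bsum]; rewrite ?IHN, ?E; auto. Qed.

Lemma bsum_add u v N : bsum (fun n => Cadd (u n) (v n)) N = Cadd (bsum u N) (bsum v N).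
Proof. induction N; cbn [bsum]; rewrite ?IHN; auto; ring. Qed.

Lemma bsum_sub u v N : bsum (fun n => Csub (u n) (v n)) N = Csub (bsum u N) (bsum v N).
Proof. induction N; cbn [bsum]; rewrite ?IHN; auto; ring. Qed.

Lemma bsum_scal c u N : bsum (fun n => Cmul c (u n)) N = Cmul c (bsum u N).
Proof. induction N; cbn [bsum]; rewrite ?IHN; auto; ring. Qed.

Lemma bsum_opp_index u N : bsum (fun n => u (- n)%Z) N = bsum u N.
Proof. induction N; cbn [bsum]; rewrite ?IHN; auto. rewrite Z.opp_involutive. ring. Qed.

Lemma bsum_shift1 u N :
  bsum (fun n => u (n + 1)%Z) N
  = Cadd (Csub (bsum u N) (u (- Z.of_nat N)%Z)) (u (Z.of_nat N + 1)%Z).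
Proof.
  induction N.
  - simpl. ring.
  - rewrite bsum_S, IHN, bsum_S.
    replace (- Z.of_nat (S N) + 1)%Z with (- Z.of_nat N)%Z by lia.
    replace (Z.of_nat N + 1)%Z with (Z.of_nat (S N)) by lia. ring.
Qed.

Lemma bsum_swap (G : Z -> Z -> Cplx) M K :
  bsum (fun m => bsum (G m) K) M = bsum (fun k => bsum (fun m => G m k) M) K.
Proof. induction M; simpl; [reflexivity|]. rewrite IHM, <- !bsum_add. reflexivity. Qed.

Lemma Cnorm_bsum_le u N : Cnorm (bsum u N) <= bsumR (fun n => Cnorm (u n)) N.
Proof.
  induction N; simpl; [lra|].
  eapply Rle_trans; [apply Cnorm_triang|].
  eapply Rle_trans; [apply Rplus_le_compat_r; apply Cnorm_triang|]. lra.
Qed.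

Lemma Cnorm_bsum_sub0_le u N :
  Cnorm (Csub (bsum u N) (u 0%Z)) <= bsumR (fun n => Cnorm (u n)) N - Cnorm (u 0%Z).
Proof.
  induction N; cbn [bsum bsumR].
  - replace (Csub (u 0%Z) (u 0%Z)) with Czero by ring. rewrite Cnorm_Czero. lra.
  - replace (Csub (Cadd (Cadd (bsum u N) (u (Z.of_nat (S N)))) (u (- Z.of_nat (S N))%Z)) (u 0%Z))
      with (Cadd (Cadd (Csub (bsum u N) (u 0%Z)) (u (Z.of_nat (S N)))) (u (- Z.of_nat (S N))%Z))
      by ring.
    eapply Rle_trans; [apply Cnorm_triang|].
    eapply Rle_trans; [apply Rplus_le_compat_r; apply Cnorm_triang|]. lra.
Qed.

Lemma bsumR_le u v N : (forall n, u n <= v n) -> bsumR u N <= bsumR v N.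
Proof.
  intro H; induction N; cbn [bsumR]; auto.
  pose proof (H (Z.of_nat (S N))); pose proof (H (- Z.of_nat (S N))%Z); lra.
Qed.

Lemma bsumR_scal a (f : Z -> R) N : bsumR (fun m => a * f m) N = a * bsumR f N.
Proof. induction N; cbn [bsumR]; rewrite ?IHN; ring. Qed.

Lemma bsumR_mono h N M : (forall n, 0 <= h n) -> (N <= M)%nat -> bsumR h N <= bsumR h M.
Proof.
  intros H HM. induction HM; [lra|]. cbn [bsumR].
  pose proof (H (Z.of_nat (S m))); pose proof (H (- Z.of_nat (S m))%Z). lra.
Qed.

Lemma bsumR_geom r N :
  0 <= r < 1 -> bsumR (fun n => r ^ Z.abs_nat n) N = (1 + r - 2 * r ^ (S N)) / (1 - r).
Proof.
  intro Hr. induction N; cbn [bsumR].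
  - simpl. field. lra.
  - rewrite IHN, Zabs2Nat.id. replace (Z.abs_nat (- Z.of_nat (S N))) with (S N) by lia.
    simpl. field. lra.
Qed.

Lemma bsumR_geom_le r N : 0 <= r < 1 -> bsumR (fun n => r ^ Z.abs_nat n) N <= (1 + r) / (1 - r).
Proof.
  intro Hr. rewrite bsumR_geom; auto. pose proof (pow_le r (S N) ltac:(lra)).
  unfold Rdiv. apply Rmult_le_compat_r; [left; apply Rinv_0_lt_compat|]; lra.
Qed.

Lemma bsumR_le_center h D q N : (forall n, 0 <= h n) -> 0 <= D -> 0 <= q < 1 ->
  (forall n, (2 <= Z.abs_nat n)%nat -> h n <= D * q ^ Z.abs_nat n) ->
  bsumR h N <= bsumR h 1 + 2 * D * q ^ 2 / (1 - q).
Proof.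
  intros H0 HD Hq Hb.
  assert (Hind : forall M, (1 <= M)%nat ->
            bsumR h M <= bsumR h 1 + 2 * D * (q ^ 2 - q ^ (S M)) / (1 - q)).
  { intros M HM. induction HM.
    - replace (q ^ 2 - q ^ 2) with 0 by ring. unfold Rdiv. rewrite Rmult_0_r, Rmult_0_l. lra.
    - cbn [bsumR]. pose proof (Hb (Z.of_nat (S m)) ltac:(lia)) as Hp.
      pose proof (Hb (- Z.of_nat (S m))%Z ltac:(lia)) as Hn.
      rewrite Zabs2Nat.id in Hp. replace (Z.abs_nat (- Z.of_nat (S m))) with (S m) in Hn by lia.
      apply Rle_trans
        with (bsumR h 1 + 2 * D * (q ^ 2 - q ^ S m) / (1 - q) + D * q ^ S m + D * q ^ S m); [lra|].
      right. simpl. field. lra. }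
  destruct N.
  - pose proof (bsumR_mono h 0 1 H0 ltac:(lia)).
    assert (0 <= 2 * D * q ^ 2 / (1 - q)).
    { unfold Rdiv. pose proof (pow_le q 2 ltac:(lra)).
      apply Rmult_le_pos; [nra|left; apply Rinv_0_lt_compat; lra]. }
    lra.
  - eapply Rle_trans; [apply Hind; lia|]. pose proof (pow_le q (S (S N)) ltac:(lra)).
    apply Rplus_le_compat_l. unfold Rdiv.
    apply Rmult_le_compat_r; [left; apply Rinv_0_lt_compat; lra|nra].
Qed.

Lemma Csum_first g m : Csum g (S m) = Cadd (g O) (Csum (fun k => g (S k)) m).
Proof.
  induction m; [simpl; ring|].
  change (Csum g (S (S m))) with (Cadd (Csum g (S m)) (g (S m))). rewrite IHm. simpl. ring.
Qed.

Lemma Csum_ext g h m : (forall k, g k = h k) -> Csum g m = Csum h m.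
Proof. intro E; induction m; simpl; rewrite ?IHm, ?E; auto. Qed.

Lemma Csum_centered f N : Csum (fun k => f (Z.of_nat k - Z.of_nat N)%Z) (2 * N + 1) = bsum f N.
Proof.
  revert f. induction N; intro f.
  - simpl. replace (0 - 0)%Z with 0%Z by lia. ring.
  - replace (2 * S N + 1)%nat with (S (S (2 * N + 1))) by lia.
    rewrite Csum_first. cbn [Csum].
    rewrite (Csum_ext _ (fun k => f (Z.of_nat k - Z.of_nat N)%Z)) by (intro k; f_equal; lia).
    rewrite IHN, bsum_S.
    replace (Z.of_nat 0 - Z.of_nat (S N))%Z with (- Z.of_nat (S N))%Z by lia.
    replace (Z.of_nat (S (2 * N + 1)) - Z.of_nat (S N))%Z with (Z.of_nat (S N)) by lia. ring.
Qed.

(* Geometric domination [|u n| <= C r^|n|] is the only summability criterion needed: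
   every series below is dominated by the terms of a theta series. *)
Definition geom_dominated (u : Z -> Cplx) (C r : R) : Prop :=
  0 <= C /\ 0 < r < 1 /\ forall n, Cnorm (u n) <= C * r ^ Z.abs_nat n.

Lemma bsum_cauchy u C r N M : geom_dominated u C r -> (N <= M)%nat ->
  Cnorm (Csub (bsum u M) (bsum u N)) <= 2 * C * r ^ (S N) / (1 - r).
Proof.
  intros [HC [Hr Hu]] HNM.
  assert (Hind : forall M, (N <= M)%nat ->
            Cnorm (Csub (bsum u M) (bsum u N)) <= 2 * C * (r ^ (S N) - r ^ (S M)) / (1 - r)).
  { intros M0 H. induction H.
    - replace (Csub (bsum u N) (bsum u N)) with Czero by ring. rewrite Cnorm_Czero.
      rewrite Rminus_diag. unfold Rdiv. rewrite Rmult_0_r, Rmult_0_l. lra.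
    - rewrite bsum_S.
      replace (Csub (Cadd (Cadd (bsum u m) (u (Z.of_nat (S m)))) (u (- Z.of_nat (S m))%Z)) (bsum u N))
        with (Cadd (Cadd (Csub (bsum u m) (bsum u N)) (u (Z.of_nat (S m)))) (u (- Z.of_nat (S m))%Z))
        by ring.
      eapply Rle_trans; [apply Cnorm_triang|].
      eapply Rle_trans; [apply Rplus_le_compat_r; apply Cnorm_triang|].
      pose proof (Hu (Z.of_nat (S m))) as Hp. pose proof (Hu (- Z.of_nat (S m))%Z) as Hn.
      rewrite Zabs2Nat.id in Hp. replace (Z.abs_nat (- Z.of_nat (S m))) with (S m) in Hn by lia.
      apply Rle_trans
        with (2 * C * (r ^ S N - r ^ S m) / (1 - r) + C * r ^ S m + C * r ^ S m); [lra|].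
      right. simpl. field. lra. }
  eapply Rle_trans; [apply Hind; auto|]. pose proof (pow_le r (S M) ltac:(lra)).
  unfold Rdiv. apply Rmult_le_compat_r; [left; apply Rinv_0_lt_compat; lra|nra].
Qed.

(* A junk value when the symmetric partial sums diverge, [Clim] being a choice. *)
Definition zsum (u : Z -> Cplx) : Cplx := Clim (bsum u).

Lemma zsum_cv u C r : geom_dominated u C r -> Ccv (bsum u) (zsum u).
Proof.
  intro H. pose proof H as [_ [Hr _]].
  destruct (Ccv_of_cauchy (bsum u) (fun N => (2 * C * r / (1 - r)) * r ^ N)) as [l Hl].
  - apply Un_cv_geom. lra.
  - intros N M HNM. eapply Rle_trans; [apply (bsum_cauchy u C r); auto|].
    right. simpl. field. lra.
  - unfold zsum. rewrite (Clim_of_Ccv _ l); auto.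
Qed.

Lemma zsum_unique u C r l : geom_dominated u C r -> Ccv (bsum u) l -> zsum u = l.
Proof. intros H Hl. apply (Ccv_unique (bsum u)); auto. apply (zsum_cv _ C r H). Qed.

Lemma zsum_tail_le u C r N : geom_dominated u C r ->
  Cnorm (Csub (zsum u) (bsum u N)) <= 2 * C * r ^ (S N) / (1 - r).
Proof.
  intro H. apply (Ccv_dist_le (bsum u) _ _ _ N); [apply (zsum_cv _ C r H)|].
  intros n Hn. apply (bsum_cauchy u C r); auto.
Qed.

Lemma Cnorm_zsum_le u C r : geom_dominated u C r -> Cnorm (zsum u) <= 2 * C / (1 - r).
Proof.
  intro H. pose proof (zsum_tail_le u C r 0 H) as Ht. destruct H as [HC [Hr Hu]].
  pose proof (Hu 0%Z) as H0. simpl in H0, Ht.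
  pose proof (Cnorm_triang (Csub (zsum u) (u 0%Z)) (u 0%Z)) as T.
  replace (Cadd (Csub (zsum u) (u 0%Z)) (u 0%Z)) with (zsum u) in T by ring.
  apply Rle_trans with (2 * C * (r * 1) / (1 - r) + C * 1); [lra|].
  apply Rle_trans with (C * (1 + r) / (1 - r)); [right; field; lra|].
  unfold Rdiv. apply Rmult_le_compat_r; [left; apply Rinv_0_lt_compat; lra|nra].
Qed.

Lemma geom_dominated_add u v C1 C2 r : geom_dominated u C1 r -> geom_dominated v C2 r ->
  geom_dominated (fun n => Cadd (u n) (v n)) (C1 + C2) r.
Proof.
  intros [H1 [Hr Hu]] [H2 [_ Hv]]. split; [lra|]. split; auto. intro n.
  eapply Rle_trans; [apply Cnorm_triang|]. pose proof (Hu n); pose proof (Hv n). lra.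
Qed.

Lemma geom_dominated_scal c u C r : geom_dominated u C r ->
  geom_dominated (fun n => Cmul c (u n)) (Cnorm c * C) r.
Proof.
  intros [H1 [Hr Hu]]. pose proof (Cnorm_ge0 c). split; [nra|]. split; auto. intro n.
  rewrite Cnorm_mul, Rmult_assoc. apply Rmult_le_compat_l; auto.
Qed.

Lemma geom_dominated_ext u v C r : geom_dominated u C r -> (forall n, u n = v n) ->
  geom_dominated v C r.
Proof. intros [a [b c]] E. split; auto. split; auto. intro n. rewrite <- E. auto. Qed.

Lemma geom_dominated_opp_index u C r : geom_dominated u C r ->
  geom_dominated (fun n => u (- n)%Z) C r.
Proof.
  intros [a [b c]]. split; auto. split; auto. intro n.
  replace (Z.abs_nat n) with (Z.abs_nat (- n)) by lia. apply c.
Qed.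

Lemma geom_dominated_shift u C r c : geom_dominated u C r ->
  geom_dominated (fun n => u (n + c)%Z) (C / r ^ Z.abs_nat c) r.
Proof.
  intros [HC [Hr Hu]]. pose proof (pow_lt r (Z.abs_nat c) ltac:(lra)).
  split; [unfold Rdiv; apply Rmult_le_pos; [lra|left; apply Rinv_0_lt_compat; lra]|].
  split; auto. intro n. eapply Rle_trans; [apply Hu|].
  assert (r ^ Z.abs_nat (n + c) * r ^ Z.abs_nat c <= r ^ Z.abs_nat n).
  { rewrite <- pow_add. apply pow_le_pow_le1; [lra|lia]. }
  apply Rle_trans with (C * (r ^ Z.abs_nat n / r ^ Z.abs_nat c)); [|right; unfold Rdiv; ring].
  apply Rmult_le_compat_l; auto. apply Rmult_le_reg_r with (r ^ Z.abs_nat c); auto.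
  unfold Rdiv. rewrite Rmult_assoc, Rinv_l; lra.
Qed.

Lemma geom_dominated_even_index u C r : geom_dominated u C r ->
  geom_dominated (fun k => u (2 * k)%Z) C r.
Proof.
  intros [HC [Hr Hu]]. split; auto. split; auto. intro n. eapply Rle_trans; [apply Hu|].
  apply Rmult_le_compat_l; auto. apply pow_le_pow_le1; [lra|lia].
Qed.

Lemma geom_dominated_rate u C r r' : geom_dominated u C r' -> r' <= r -> r < 1 ->
  geom_dominated u C r.
Proof.
  intros [HC [Hr Hu]] Hrr H1. split; auto. split; [lra|]. intro n.
  eapply Rle_trans; [apply Hu|]. apply Rmult_le_compat_l; auto. apply pow_incr. lra.
Qed.

Lemma zsum_add u v C1 C2 r : geom_dominated u C1 r -> geom_dominated v C2 r ->
  zsum (fun n => Cadd (u n) (v n)) = Cadd (zsum u) (zsum v).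
Proof.
  intros Hu Hv. apply (zsum_unique _ _ _ _ (geom_dominated_add _ _ _ _ _ Hu Hv)).
  apply (Ccv_ext (fun N => Cadd (bsum u N) (bsum v N))); [intro; rewrite bsum_add; auto|].
  apply Ccv_add; eapply zsum_cv; eauto.
Qed.

Lemma zsum_scal c u C r : geom_dominated u C r -> zsum (fun n => Cmul c (u n)) = Cmul c (zsum u).
Proof.
  intros Hu. apply (zsum_unique _ _ _ _ (geom_dominated_scal c _ _ _ Hu)).
  apply (Ccv_ext (fun N => Cmul c (bsum u N))); [intro; rewrite bsum_scal; auto|].
  apply Ccv_scal; eapply zsum_cv; eauto.
Qed.

Lemma zsum_ext u v C r : geom_dominated u C r -> (forall n, u n = v n) -> zsum u = zsum v.
Proof.
  intros Hu E. symmetry. apply (zsum_unique _ C r); [eapply geom_dominated_ext; eauto|].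
  apply (Ccv_ext (bsum u)); [intro; apply bsum_ext; auto|]. eapply zsum_cv; eauto.
Qed.

Lemma zsum_opp_index u C r : geom_dominated u C r -> zsum (fun n => u (- n)%Z) = zsum u.
Proof.
  intros Hu. apply (zsum_unique _ _ _ _ (geom_dominated_opp_index _ _ _ Hu)).
  apply (Ccv_ext (bsum u)); [intro; rewrite bsum_opp_index; auto|]. eapply zsum_cv; eauto.
Qed.

Lemma zsum_shift1 u C r : geom_dominated u C r -> zsum (fun n => u (n + 1)%Z) = zsum u.
Proof.
  intros Hu. apply (zsum_unique _ _ _ _ (geom_dominated_shift _ _ _ 1 Hu)).
  pose proof Hu as [HC [Hr Hb]].
  apply (Ccv_of_bound _ _ (fun N => (2 * C * r / (1 - r) + C + C * r) * r ^ N));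
    [apply Un_cv_geom; lra|].
  intro N. rewrite bsum_shift1.
  replace (Csub (Cadd (Csub (bsum u N) (u (- Z.of_nat N)%Z)) (u (Z.of_nat N + 1)%Z)) (zsum u))
    with (Cadd (Csub (bsum u N) (zsum u)) (Csub (u (Z.of_nat N + 1)%Z) (u (- Z.of_nat N)%Z)))
    by ring.
  eapply Rle_trans; [apply Cnorm_triang|].
  eapply Rle_trans; [apply Rplus_le_compat_l; apply Cnorm_triang_sub|].
  rewrite Cnorm_sub_sym. pose proof (zsum_tail_le u C r N Hu).
  pose proof (Hb (Z.of_nat N + 1)%Z) as Hp. pose proof (Hb (- Z.of_nat N)%Z) as Hn.
  replace (Z.of_nat N + 1)%Z with (Z.of_nat (S N)) in * by lia.
  rewrite Zabs2Nat.id in Hp. replace (Z.abs_nat (- Z.of_nat N)) with N in Hn by lia.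
  apply Rle_trans with (2 * C * r ^ S N / (1 - r) + (C * r ^ S N + C * r ^ N)); [lra|].
  right. simpl. field. lra.
Qed.

Lemma zsum_shift_nat u C r k : geom_dominated u C r ->
  zsum (fun n => u (n + Z.of_nat k)%Z) = zsum u.
Proof.
  revert u C. induction k; intros u C Hu.
  - symmetry. apply (zsum_ext u _ C r); auto. intro n. f_equal. lia.
  - transitivity (zsum (fun n => (fun m => u (m + 1)%Z) (n + Z.of_nat k)%Z)).
    + apply (zsum_ext _ _ _ r (geom_dominated_shift u C r (Z.of_nat (S k)) Hu)).
      intro n. f_equal. lia.
    + rewrite (IHk _ _ (geom_dominated_shift u C r 1 Hu)). apply (zsum_shift1 u C r Hu).
Qed.

Lemma zsum_shift u C r c : geom_dominated u C r -> zsum (fun n => u (n + c)%Z) = zsum u.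
Proof.
  intro Hu. destruct (Z_le_dec 0 c) as [Hc|Hc].
  - rewrite <- (zsum_shift_nat u C r (Z.to_nat c) Hu).
    apply (zsum_ext _ _ _ r (geom_dominated_shift u C r c Hu)). intro n. f_equal. lia.
  - set (w := fun m => u (- m)%Z).
    assert (Hw : geom_dominated w C r) by (apply geom_dominated_opp_index; auto).
    set (w' := fun m => w (m + Z.of_nat (Z.to_nat (- c)))%Z).
    assert (Hw' : geom_dominated w' (C / r ^ Z.abs_nat (Z.of_nat (Z.to_nat (- c)))) r)
      by (apply geom_dominated_shift; auto).
    transitivity (zsum (fun n => w' (- n)%Z)).
    + apply (zsum_ext _ _ _ r (geom_dominated_shift u C r c Hu)).
      intro n. unfold w', w. f_equal. lia.
    + rewrite (zsum_opp_index _ _ _ Hw'). unfold w'. rewrite (zsum_shift_nat _ _ _ _ Hw).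
      unfold w. apply (zsum_opp_index _ _ _ Hu).
Qed.

Definition CRmul (a : R) (u : Cplx) : Cplx := Cmul (RtoC a) u.

Lemma Cnorm_CRmul a u : Cnorm (CRmul a u) = Rabs a * Cnorm u.
Proof. unfold CRmul. rewrite Cnorm_mul, Cnorm_RtoC. auto. Qed.

Lemma geom_dominated_weight (w : Z -> R) A u C r : 0 <= A -> (forall n, Rabs (w n) <= A) ->
  geom_dominated u C r -> geom_dominated (fun n => CRmul (w n) (u n)) (A * C) r.
Proof.
  intros HA Hw [HC [Hr Hu]]. split; [nra|]. split; auto. intro n. rewrite Cnorm_CRmul.
  pose proof (Hw n). pose proof (Hu n). pose proof (Cnorm_ge0 (u n)). pose proof (Rabs_pos (w n)).
  rewrite Rmult_assoc. apply Rmult_le_compat; auto.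
Qed.

Definition altsgn (n : Z) : R := if Z.even n then 1 else -1.

Lemma altsgn_add n m : altsgn (n + m) = altsgn n * altsgn m.
Proof. unfold altsgn. rewrite Z.even_add. destruct (Z.even n), (Z.even m); simpl; ring. Qed.

Lemma altsgn_opp n : altsgn (- n) = altsgn n.
Proof. unfold altsgn. rewrite Z.even_opp. auto. Qed.

Lemma altsgn_sqr n : altsgn n * altsgn n = 1.
Proof. unfold altsgn. destruct (Z.even n); ring. Qed.

Lemma altsgn_even k : altsgn (2 * k) = 1.
Proof. unfold altsgn. rewrite Z.even_mul. auto. Qed.

Lemma altsgn_odd k : altsgn (2 * k + 1) = -1.
Proof. unfold altsgn. rewrite Z.even_add, Z.even_mul. auto. Qed.

Lemma Rabs_altsgn n : Rabs (altsgn n) <= 1.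
Proof. unfold altsgn; destruct (Z.even n); unfold Rabs; destruct (Rcase_abs _); lra. Qed.

Lemma Rabs_1_add_altsgn n : Rabs (1 + altsgn n) <= 2.
Proof. unfold altsgn; destruct (Z.even n); unfold Rabs; destruct (Rcase_abs _); lra. Qed.

Lemma Rabs_1_sub_altsgn n : Rabs (1 - altsgn n) <= 2.
Proof. unfold altsgn; destruct (Z.even n); unfold Rabs; destruct (Rcase_abs _); lra. Qed.

Lemma geom_dominated_altsgn u C r : geom_dominated u C r ->
  geom_dominated (fun n => CRmul (altsgn n) (u n)) C r.
Proof.
  intro H. rewrite <- (Rmult_1_l C). apply geom_dominated_weight; auto; [lra|apply Rabs_altsgn].
Qed.

Lemma bsum_even_part u N :
  bsum (fun n => CRmul (1 + altsgn n) (u n)) (2 * N) = CRmul 2 (bsum (fun k => u (2 * k)%Z) N) /\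
  bsum (fun n => CRmul (1 + altsgn n) (u n)) (2 * N + 1) = CRmul 2 (bsum (fun k => u (2 * k)%Z) N).
Proof.
  induction N.
  - simpl. unfold CRmul. change (altsgn 0) with 1. change (altsgn 1) with (-1).
    change (altsgn (-1)) with (-1). split; apply Cplx_ext; simpl; ring.
  - destruct IHN as [_ H2].
    assert (E : bsum (fun n => CRmul (1 + altsgn n) (u n)) (2 * S N)
                = CRmul 2 (bsum (fun k => u (2 * k)%Z) (S N))).
    { replace (2 * S N)%nat with (S (2 * N + 1)) by lia. rewrite bsum_S, H2, (bsum_S _ N).
      replace (Z.of_nat (S (2 * N + 1))) with (2 * Z.of_nat (S N))%Z by lia.
      replace (- (2 * Z.of_nat (S N)))%Z with (2 * - Z.of_nat (S N))%Z by lia.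
      rewrite !altsgn_even. unfold CRmul. apply Cplx_ext; simpl; ring. }
    split; auto.
    replace (2 * S N + 1)%nat with (S (2 * S N)) by lia. rewrite bsum_S, E.
    replace (Z.of_nat (S (2 * S N))) with (2 * Z.of_nat (S N) + 1)%Z by lia.
    replace (- (2 * Z.of_nat (S N) + 1))%Z with (2 * (- Z.of_nat (S N) - 1) + 1)%Z by lia.
    rewrite !altsgn_odd. unfold CRmul. apply Cplx_ext; simpl; ring.
Qed.

Lemma zsum_even_part u C r : geom_dominated u C r ->
  zsum (fun n => CRmul (1 + altsgn n) (u n)) = CRmul 2 (zsum (fun k => u (2 * k)%Z)).
Proof.
  intro Hu. apply (Ccv_unique (fun N => bsum (fun n => CRmul (1 + altsgn n) (u n)) (2 * N))).
  - apply (Ccv_subseq (bsum (fun n => CRmul (1 + altsgn n) (u n))) _ (fun N => 2 * N)%nat);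
      [intro; lia|].
    apply (zsum_cv _ (2 * C) r). apply geom_dominated_weight; auto; [lra|apply Rabs_1_add_altsgn].
  - apply (Ccv_ext (fun N => CRmul 2 (bsum (fun k => u (2 * k)%Z) N))).
    + intro N. symmetry. apply bsum_even_part.
    + apply Ccv_scal. apply (zsum_cv _ _ _ (geom_dominated_even_index _ _ _ Hu)).
Qed.

(** * Double series *)

Definition geom_dominated2 (G : Z -> Z -> Cplx) (C r : R) : Prop :=
  0 <= C /\ 0 < r < 1 /\
  forall m k, Cnorm (G m k) <= C * r ^ Z.abs_nat m * r ^ Z.abs_nat k.

Lemma geom_dominated2_transpose G C r : geom_dominated2 G C r ->
  geom_dominated2 (fun k m => G m k) C r.
Proof.
  intros [HC [Hr HG]]. split; auto. split; auto. intros k m.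
  eapply Rle_trans; [apply HG|]. right; ring.
Qed.

Lemma geom_dominated2_row G C r m : geom_dominated2 G C r ->
  geom_dominated (G m) (C * r ^ Z.abs_nat m) r.
Proof.
  intros [HC [Hr HG]]. split; [apply Rmult_le_pos; auto; apply pow_le; lra|]. split; auto.
Qed.

Lemma geom_dominated2_row_sums G C r : geom_dominated2 G C r ->
  geom_dominated (fun m => zsum (G m)) (2 * C / (1 - r)) r.
Proof.
  intros HG. pose proof HG as [HC [Hr _]].
  split; [unfold Rdiv; apply Rmult_le_pos; [lra|left; apply Rinv_0_lt_compat; lra]|].
  split; auto. intro m.
  eapply Rle_trans; [apply (Cnorm_zsum_le _ _ _ (geom_dominated2_row G C r m HG))|].
  right; field. lra.
Qed.

Lemma bsum_square_cv G C r : geom_dominated2 G C r ->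
  Ccv (fun N => bsum (fun m => bsum (G m) N) N) (zsum (fun m => zsum (G m))).
Proof.
  intros HG. pose proof HG as [HC [Hr _]].
  pose proof (geom_dominated2_row_sums G C r HG) as HF.
  set (K1 := 2 * (2 * C / (1 - r)) * r / (1 - r)).
  set (K2 := 2 * C * r / (1 - r) * ((1 + r) / (1 - r))).
  apply (Ccv_of_bound _ _ (fun N => (K1 + K2) * r ^ N)); [apply Un_cv_geom; lra|].
  intro N.
  replace (Csub (bsum (fun m => bsum (G m) N) N) (zsum (fun m => zsum (G m))))
    with (Copp (Cadd (Csub (zsum (fun m => zsum (G m))) (bsum (fun m => zsum (G m)) N))
                     (bsum (fun m => Csub (zsum (G m)) (bsum (G m) N)) N)))
    by (rewrite bsum_sub; ring).
  rewrite Cnorm_opp. eapply Rle_trans; [apply Cnorm_triang|].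
  pose proof (zsum_tail_le _ _ _ N HF) as Hrows.
  assert (Hinner : Cnorm (bsum (fun m => Csub (zsum (G m)) (bsum (G m) N)) N) <= K2 * r ^ N).
  { eapply Rle_trans; [apply Cnorm_bsum_le|].
    eapply Rle_trans.
    { apply (bsumR_le _ (fun m => 2 * C * r ^ S N / (1 - r) * r ^ Z.abs_nat m)). intro m.
      eapply Rle_trans; [apply (zsum_tail_le _ _ _ N (geom_dominated2_row G C r m HG))|].
      right. simpl. field. lra. }
    rewrite bsumR_scal.
    apply Rle_trans with (2 * C * r ^ S N / (1 - r) * ((1 + r) / (1 - r))).
    - apply Rmult_le_compat_l; [|apply bsumR_geom_le; lra].
      pose proof (pow_le r (S N) ltac:(lra)).
      unfold Rdiv. apply Rmult_le_pos; [nra|left; apply Rinv_0_lt_compat; lra].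
    - right. unfold K2. simpl. field. lra. }
  apply Rle_trans with (K1 * r ^ N + K2 * r ^ N); [|right; ring].
  apply Rplus_le_compat; auto. eapply Rle_trans; [apply Hrows|]. right. unfold K1. simpl. field. lra.
Qed.

Lemma zsum_swap G C r : geom_dominated2 G C r ->
  zsum (fun m => zsum (G m)) = zsum (fun k => zsum (fun m => G m k)).
Proof.
  intros HG. apply (Ccv_unique (fun N => bsum (fun m => bsum (G m) N) N)).
  - apply (bsum_square_cv _ _ _ HG).
  - apply (Ccv_ext (fun N => bsum (fun k => bsum (fun m => G m k) N) N)).
    + intro N. symmetry. apply bsum_swap.
    + apply (bsum_square_cv _ _ _ (geom_dominated2_transpose _ _ _ HG)).
Qed.

Lemma geom_dominated_reflect u C r m : geom_dominated u C r ->
  geom_dominated (fun j => u (- j + m)%Z) (C / r ^ Z.abs_nat m) r.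
Proof. intro H. apply (geom_dominated_opp_index (fun j => u (j + m)%Z)), geom_dominated_shift, H. Qed.

(* Only the [n] of the same parity as [m] survive, and [n = m - 2k] enumerates them. *)
Lemma zsum_same_parity f C r m : geom_dominated f C r ->
  zsum (fun n => CRmul (1 + altsgn m * altsgn n) (f n)) = CRmul 2 (zsum (fun k => f (m - 2 * k)%Z)).
Proof.
  intro Hf. pose proof Hf as [HC [Hr _]].
  set (g := fun n => CRmul (1 + altsgn m * altsgn n) (f n)).
  assert (Hg : geom_dominated g (2 * C) r).
  { apply geom_dominated_weight; auto; [lra|]. intro n.
    unfold altsgn; destruct (Z.even m), (Z.even n); rewrite Rabs_pos_eq; lra. }
  set (u := fun j => f (- j + m)%Z).
  pose proof (geom_dominated_reflect f C r m Hf) as Hu. fold u in Hu.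
  pose proof (geom_dominated_opp_index _ _ _ Hg) as Hg'.
  transitivity (zsum (fun j => CRmul (1 + altsgn j) (u j))).
  - rewrite <- (zsum_opp_index _ _ _ Hg), <- (zsum_shift _ _ _ (- m) Hg').
    apply (zsum_ext _ _ _ r (geom_dominated_shift _ _ _ (- m) Hg')). intro j.
    unfold g, u. replace (- (j + - m))%Z with (- j + m)%Z by lia. f_equal.
    rewrite altsgn_add, altsgn_opp.
    replace (altsgn m * (altsgn j * altsgn m)) with ((altsgn m * altsgn m) * altsgn j) by ring.
    rewrite altsgn_sqr. ring.
  - rewrite (zsum_even_part _ _ _ Hu). f_equal.
    apply (zsum_ext _ _ _ r (geom_dominated_even_index _ _ _ Hu)). intro k. unfold u. f_equal. lia.
Qed.

(* The series form of the theta duplication formulas: with [e = θ(z,τ)] and [f = θ(0,τ)] terms,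
   [2 (Σ P)(Σ Q)] is [Σ_m e_m Σ_n (1 + (-1)^(m+n)) f_n], after the substitution [n = m - 2k],
   [m = a + k]. *)
Lemma zsum_duplication (e f P Q : Z -> Cplx) C r :
  geom_dominated f C r -> geom_dominated P C r -> geom_dominated Q C r ->
  geom_dominated2 (fun m k => Cmul (e m) (f (m - 2 * k)%Z)) C r ->
  (forall a k, Cmul (e (a + k)%Z) (f (a - k)%Z) = Cmul (P a) (Q k)) ->
  zsum (fun m => Cmul (e m) (zsum (fun n => CRmul (1 + altsgn m * altsgn n) (f n))))
  = CRmul 2 (Cmul (zsum P) (zsum Q)).
Proof.
  intros Hf HP HQ HG Hprod. pose proof HG as [HC [Hr _]].
  set (G := fun m k => Cmul (e m) (f (m - 2 * k)%Z)).
  pose proof (geom_dominated2_row_sums G C r HG) as HF.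
  pose proof (geom_dominated2_row_sums _ _ _ (geom_dominated2_transpose G C r HG)) as HFt.
  transitivity (zsum (fun m => CRmul 2 (zsum (G m)))).
  - symmetry. apply (zsum_ext _ _ _ r (geom_dominated_scal (RtoC 2) _ _ _ HF)).
    intro m. rewrite zsum_same_parity with (C := C) (r := r) by auto.
    assert (Hfm : geom_dominated (fun k => f (m - 2 * k)%Z) (C / r ^ Z.abs_nat m) r).
    { apply (geom_dominated_ext _ _ _ _
               (geom_dominated_even_index _ _ _ (geom_dominated_reflect f C r m Hf))).
      intro k. f_equal. lia. }
    unfold G. rewrite (zsum_scal (e m) _ _ _ Hfm). unfold CRmul. ring.
  - unfold CRmul. rewrite (zsum_scal (RtoC 2) _ _ _ HF). f_equal.
    rewrite (zsum_swap G C r HG).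
    transitivity (zsum (fun k => Cmul (zsum P) (Q k))).
    + apply (zsum_ext _ _ _ r HFt). intro k.
      pose proof (geom_dominated2_row _ _ _ k (geom_dominated2_transpose G C r HG)) as Hk.
      rewrite <- (zsum_shift _ _ _ k Hk).
      transitivity (zsum (fun a => Cmul (Q k) (P a))).
      * apply (zsum_ext _ _ _ r (geom_dominated_shift _ _ _ k Hk)). intro a. unfold G.
        replace (a + k - 2 * k)%Z with (a - k)%Z by lia. rewrite Hprod. ring.
      * rewrite (zsum_scal _ _ _ _ HP). ring.
    + rewrite (zsum_scal _ _ _ _ HQ). auto.
Qed.

(** * Theta series *)

Lemma cos_sin_PI_IZR n : cos (PI * IZR n) = altsgn n /\ sin (PI * IZR n) = 0.
Proof.
  assert (Hnat : forall k, cos (PI * INR k) = altsgn (Z.of_nat k) /\ sin (PI * INR k) = 0).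
  { induction k.
    - simpl. rewrite Rmult_0_r, cos_0, sin_0. auto.
    - rewrite S_INR. replace (PI * (INR k + 1)) with (PI * INR k + PI) by ring.
      rewrite neg_cos, neg_sin. destruct IHk as [A B]. rewrite A, B.
      replace (Z.of_nat (S k)) with (Z.of_nat k + 1)%Z by lia. rewrite altsgn_add.
      change (altsgn 1) with (-1). split; ring. }
  destruct (Z_le_dec 0 n).
  - replace n with (Z.of_nat (Z.to_nat n)) by lia. rewrite <- INR_IZR_INZ. apply Hnat.
  - replace n with (- Z.of_nat (Z.to_nat (- n)))%Z by lia.
    rewrite opp_IZR, <- INR_IZR_INZ, altsgn_opp.
    replace (PI * - INR (Z.to_nat (- n))) with (- (PI * INR (Z.to_nat (- n)))) by ring.
    rewrite cos_neg, sin_neg. destruct (Hnat (Z.to_nat (- n))) as [A B]. rewrite A, B. split; auto.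
    ring.
Qed.

Lemma theta_term_0 w tau : theta_term w tau 0%Z = Cone.
Proof.
  unfold theta_term.
  replace (Cadd (Cmul (RtoC (PI * IZR 0 ^ 2)) (Cmul Ci tau)) (Cmul (RtoC (2 * PI * IZR 0)) (Cmul Ci w)))
    with Czero by (apply Cplx_ext; simpl; ring).
  apply Cplx_ext; simpl; rewrite ?exp_0, ?cos_0, ?sin_0; ring.
Qed.

Lemma theta_term_shift_half z tau n :
  theta_term (Cadd z (RtoC (1/2))) tau n = CRmul (altsgn n) (theta_term z tau n).
Proof.
  unfold theta_term. destruct (cos_sin_PI_IZR n) as [A B].
  replace (Cadd (Cmul (RtoC (PI * IZR n ^ 2)) (Cmul Ci tau))
                (Cmul (RtoC (2 * PI * IZR n)) (Cmul Ci (Cadd z (RtoC (1 / 2))))))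
    with (Cadd (Cadd (Cmul (RtoC (PI * IZR n ^ 2)) (Cmul Ci tau))
                     (Cmul (RtoC (2 * PI * IZR n)) (Cmul Ci z))) (mkC 0 (PI * IZR n)))
    by (apply Cplx_ext; unfold Cadd, Cmul, RtoC, Ci; simpl; field).
  rewrite Cexp_add. unfold CRmul. rewrite (Cplx_ring.(Rmul_comm) (RtoC (altsgn n))). f_equal.
  apply Cplx_ext; unfold Cexp, RtoC; cbn [Re Im]; rewrite ?A, ?B, exp_0; ring.
Qed.

Definition Ctwice (tau : Cplx) : Cplx := mkC (2 * Re tau) (2 * Im tau).

(* The algebraic heart of the duplication formula: (a+k)² + (a-k)² = 2a² + 2k². *)
Lemma theta_term_mul z tau a k :
  Cmul (theta_term z tau (a + k)) (theta_term Czero tau (a - k)) =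
  Cmul (theta_term z (Ctwice tau) a) (theta_term z (Ctwice tau) k).
Proof.
  unfold theta_term. rewrite <- !Cexp_add. f_equal.
  apply Cplx_ext; unfold Cadd, Cmul, RtoC, Ci, Czero, Ctwice; cbn [Re Im];
    rewrite ?plus_IZR, ?minus_IZR; simpl; ring.
Qed.

Lemma theta_term_norm z tau n :
  Cnorm (theta_term z tau n) = exp (- (PI * IZR n ^ 2 * Im tau) - 2 * PI * IZR n * Im z).
Proof. unfold theta_term. rewrite Cnorm_Cexp. f_equal. simpl. ring. Qed.

Lemma IZR_mul_Im_le n y T : 0 <= y <= T / 4 -> - IZR n * y <= IZR (Z.abs n) * (T / 4).
Proof.
  intro Hy. destruct (Z_le_dec 0 n).
  - rewrite Z.abs_eq by lia. assert (0 <= IZR n) by (apply IZR_le; lia). nra.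
  - rewrite Z.abs_neq, opp_IZR by lia. assert (IZR n <= 0) by (apply IZR_le; lia). nra.
Qed.

Lemma theta_term_le_exp z tau n : 0 < Im tau -> 0 <= Im z <= Im tau / 4 ->
  Cnorm (theta_term z tau n) <= exp (- (PI * Im tau * (IZR n ^ 2 - IZR (Z.abs n) / 2))).
Proof.
  intros HT HY. rewrite theta_term_norm. apply exp_le.
  pose proof (IZR_mul_Im_le n _ _ HY). pose proof PI_RGT_0.
  assert (0 <= PI * (IZR (Z.abs n) * (Im tau / 4) + IZR n * Im z)) by (apply Rmult_le_pos; lra).
  nra.
Qed.

(* [rho (Im τ) = |exp(πiτ)|^(1/2)] is the decay rate of the theta terms: [|q_n| <= rho^|n|]. *)
Definition rho (T : R) : R := exp (- (PI * T / 2)).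

Lemma rho_bounds T : 0 < T -> 0 < rho T < 1.
Proof.
  intro H. unfold rho. split; [apply exp_pos|]. rewrite <- exp_0. apply exp_increasing.
  pose proof PI_RGT_0. nra.
Qed.

Lemma rho_antimono T T' : 0 < T -> T <= T' -> rho T' <= rho T.
Proof. intros. unfold rho. apply exp_le. pose proof PI_RGT_0. nra. Qed.

Lemma rho_pow T k : rho T ^ k = exp (- (PI * T * (INR k / 2))).
Proof. unfold rho. rewrite exp_pow. f_equal. field. Qed.

Lemma theta_term_le_rho z tau n : 0 < Im tau -> 0 <= Im z <= Im tau / 4 ->
  Cnorm (theta_term z tau n) <= rho (Im tau) ^ Z.abs_nat n.
Proof.
  intros HT HY. eapply Rle_trans; [apply theta_term_le_exp; auto|].
  rewrite rho_pow. apply exp_le. rewrite INR_IZR_INZ, Nat2Z.inj_abs_nat.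
  assert (IZR (Z.abs n) <= IZR n ^ 2)
    by (replace (IZR n ^ 2) with (IZR (n * n)) by (rewrite mult_IZR; ring); apply IZR_le; nia).
  pose proof PI_RGT_0. assert (0 < PI * Im tau) by nra. nra.
Qed.

Lemma theta_term_1_le z tau : 0 < Im tau -> 0 <= Im z <= Im tau / 4 ->
  Cnorm (theta_term z tau 1) <= rho (Im tau) ^ 2.
Proof.
  intros. rewrite theta_term_norm, rho_pow. apply exp_le. simpl. pose proof PI_RGT_0. nra.
Qed.

Lemma theta_term_m1_le z tau : 0 < Im tau -> 0 <= Im z <= Im tau / 4 ->
  Cnorm (theta_term z tau (-1)) <= rho (Im tau).
Proof.
  intros. rewrite theta_term_norm. unfold rho. apply exp_le. simpl. pose proof PI_RGT_0. nra.
Qed.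

Lemma theta_term_far_le z tau n : 0 < Im tau -> 0 <= Im z <= Im tau / 4 ->
  (2 <= Z.abs_nat n)%nat -> Cnorm (theta_term z tau n) <= (rho (Im tau) ^ 3) ^ Z.abs_nat n.
Proof.
  intros HT HY Hn. eapply Rle_trans; [apply theta_term_le_exp; auto|].
  rewrite <- pow_mult, rho_pow. apply exp_le.
  rewrite mult_INR, (INR_IZR_INZ (Z.abs_nat n)), Nat2Z.inj_abs_nat.
  assert (2 * IZR (Z.abs n) <= IZR n ^ 2).
  { replace (IZR n ^ 2) with (IZR (n * n)) by (rewrite mult_IZR; ring).
    rewrite <- mult_IZR. apply IZR_le. nia. }
  simpl INR. pose proof PI_RGT_0. assert (0 < PI * Im tau) by nra. nra.
Qed.

Lemma Z_sqr_add_sqr_ge_abs (m k : Z) : (Z.abs m + Z.abs k <= m * m + (m - 2 * k) * (m - 2 * k))%Z.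
Proof.
  assert (Hsq : forall x : Z, (Z.abs x <= x * x)%Z) by (intro x; nia).
  pose proof (Hsq m). pose proof (Hsq (m - 2 * k)%Z).
  destruct (Z_le_dec 2 (Z.abs m)); [nia|].
  assert (m = 0 \/ m = 1 \/ m = -1)%Z as [E|[E|E]] by lia; subst m; nia.
Qed.

Lemma geom_dominated2_theta_terms z tau : 0 < Im tau -> 0 <= Im z <= Im tau / 4 ->
  geom_dominated2 (fun m k => Cmul (theta_term z tau m) (theta_term Czero tau (m - 2 * k)))
                  1 (rho (Im tau)).
Proof.
  intros HT HY. split; [lra|]. split; [apply rho_bounds; auto|]. intros m k.
  rewrite Cnorm_mul, Rmult_1_l, <- pow_add, rho_pow.
  eapply Rle_trans.
  { apply Rmult_le_compat; try apply Cnorm_ge0; [apply theta_term_le_exp; auto|].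
    rewrite theta_term_norm. apply Rle_refl. }
  rewrite <- exp_plus. apply exp_le.
  rewrite plus_INR, !INR_IZR_INZ, !Nat2Z.inj_abs_nat.
  pose proof (Z_sqr_add_sqr_ge_abs m k) as Q. apply IZR_le in Q.
  repeat rewrite ?plus_IZR, ?mult_IZR, ?minus_IZR in Q.
  unfold Czero, RtoC; cbn [Im]. rewrite minus_IZR, mult_IZR.
  assert (0 <= IZR (Z.abs k)) by (apply IZR_le; lia).
  pose proof PI_RGT_0. assert (0 < PI * Im tau) by nra.
  simpl IZR. nra.
Qed.

Lemma geom_dominated_theta_term z tau : 0 < Im tau -> 0 <= Im z <= Im tau / 4 ->
  geom_dominated (theta_term z tau) 1 (rho (Im tau)).
Proof.
  intros HT HY. split; [lra|]. split; [apply rho_bounds; auto|].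
  intro n. rewrite Rmult_1_l. apply theta_term_le_rho; auto.
Qed.

Lemma theta_zsum z tau : 0 < Im tau -> 0 <= Im z <= Im tau / 4 ->
  theta z tau = zsum (theta_term z tau).
Proof.
  intros HT HY. apply Clim_of_Ccv.
  apply (Ccv_ext (bsum (theta_term z tau))); [intro N; unfold theta_psum; rewrite Csum_centered; auto|].
  apply (zsum_cv _ _ _ (geom_dominated_theta_term z tau HT HY)).
Qed.

Lemma theta01_zsum z tau : 0 < Im tau -> 0 <= Im z <= Im tau / 4 ->
  theta01 z tau = zsum (fun n => CRmul (altsgn n) (theta_term z tau n)).
Proof.
  intros HT HY. unfold theta01. rewrite theta_zsum by (auto; unfold Cadd, RtoC; simpl; lra).
  apply (zsum_ext _ _ 1 (rho (Im tau))).
  - apply geom_dominated_theta_term; auto. unfold Cadd, RtoC; simpl; lra.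
  - intro n. apply theta_term_shift_half.
Qed.

Section ThetaDuplication.
Variables (z tau : Cplx).
Hypothesis HT : 0 < Im tau.
Hypothesis HY : 0 <= Im z <= Im tau / 4.

Let e := theta_term z tau.
Let f := theta_term Czero tau.
Let p := theta_term z (Ctwice tau).
Let r := rho (Im tau).

Lemma Im_Czero_range : 0 <= Im Czero <= Im tau / 4.
Proof. unfold Czero, RtoC; simpl. lra. Qed.

Lemma Im_Ctwice_pos : 0 < Im (Ctwice tau).
Proof. unfold Ctwice; simpl. lra. Qed.

Lemma Im_range_Ctwice w : 0 <= Im w <= Im tau / 4 -> 0 <= Im w <= Im (Ctwice tau) / 4.
Proof. unfold Ctwice; simpl. lra. Qed.

Lemma geom_dominated_e : geom_dominated e 1 r.
Proof. apply geom_dominated_theta_term; auto. Qed.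

Lemma geom_dominated_f : geom_dominated f 1 r.
Proof. apply geom_dominated_theta_term; auto. apply Im_Czero_range. Qed.

Lemma geom_dominated_p : geom_dominated p 1 r.
Proof.
  apply (geom_dominated_rate _ _ _ (rho (Im (Ctwice tau)))).
  - apply geom_dominated_theta_term; [apply Im_Ctwice_pos|apply Im_range_Ctwice; auto].
  - apply rho_antimono; auto. unfold Ctwice; simpl; lra.
  - apply rho_bounds; auto.
Qed.

Lemma zsum_f_split m :
  zsum (fun n => CRmul (1 + altsgn m * altsgn n) (f n)) =
  Cadd (zsum f) (Cmul (RtoC (altsgn m)) (zsum (fun n => CRmul (altsgn n) (f n)))).
Proof.
  pose proof (geom_dominated_altsgn _ _ _ geom_dominated_f) as Hs.
  pose proof (geom_dominated_scal (RtoC (altsgn m)) _ _ _ Hs) as Hms.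
  rewrite <- (zsum_scal _ _ _ _ Hs), <- (zsum_add _ _ _ _ _ geom_dominated_f Hms).
  symmetry. apply (zsum_ext _ _ _ r (geom_dominated_add _ _ _ _ _ geom_dominated_f Hms)).
  intro n. unfold CRmul. apply Cplx_ext; simpl; ring.
Qed.

Lemma theta00_duplication :
  Cadd (Cmul (theta00 z tau) (theta00 Czero tau)) (Cmul (theta01 z tau) (theta01 Czero tau)) =
  CRmul 2 (Cmul (theta00 z (Ctwice tau)) (theta00 z (Ctwice tau))).
Proof.
  pose proof Im_Czero_range as H0.
  unfold theta00. rewrite !theta_zsum, !theta01_zsum; auto;
    [|apply Im_Ctwice_pos|apply Im_range_Ctwice; auto].
  fold e f p.
  rewrite <- (zsum_duplication e f p p 1 r geom_dominated_f geom_dominated_p geom_dominated_p);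
    [|apply geom_dominated2_theta_terms; auto|intros a k; apply theta_term_mul].
  set (A := zsum f). set (B := zsum (fun n => CRmul (altsgn n) (f n))).
  pose proof geom_dominated_e as He. pose proof (geom_dominated_altsgn _ _ _ He) as Hse.
  pose proof (geom_dominated_add _ _ _ _ _ (geom_dominated_scal A _ _ _ He)
                (geom_dominated_scal B _ _ _ Hse)) as Hg.
  rewrite <- (zsum_ext _ (fun m => Cmul (e m) (zsum (fun n => CRmul (1 + altsgn m * altsgn n) (f n))))
               _ r Hg) by (intro m; rewrite zsum_f_split; fold A B; unfold CRmul; ring).
  rewrite (zsum_add _ _ _ _ _ (geom_dominated_scal A _ _ _ He) (geom_dominated_scal B _ _ _ Hse)).
  rewrite (zsum_scal _ _ _ _ He), (zsum_scal _ _ _ _ Hse). ring.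
Qed.

Lemma theta01_duplication :
  Cadd (Cmul (theta00 z tau) (theta01 Czero tau)) (Cmul (theta01 z tau) (theta00 Czero tau)) =
  CRmul 2 (Cmul (theta01 z (Ctwice tau)) (theta01 z (Ctwice tau))).
Proof.
  pose proof Im_Czero_range as H0.
  unfold theta00. rewrite !theta_zsum, !theta01_zsum; auto;
    [|apply Im_Ctwice_pos|apply Im_range_Ctwice; auto].
  fold e f p.
  pose proof geom_dominated_e as He. pose proof (geom_dominated_altsgn _ _ _ He) as Hse.
  pose proof (geom_dominated_altsgn _ _ _ geom_dominated_p) as Hsp.
  rewrite <- (zsum_duplication (fun n => CRmul (altsgn n) (e n)) f _ _ 1 r geom_dominated_f Hsp Hsp).
  2: { pose proof (geom_dominated2_theta_terms z tau HT HY) as [HC [Hr HG]].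
       split; auto. split; auto. intros m k.
       unfold CRmul. rewrite <- Cplx_ring.(Rmul_assoc), Cnorm_mul, Cnorm_RtoC.
       specialize (HG m k). fold e f r in HG. pose proof (Rabs_altsgn m).
       pose proof (Cnorm_ge0 (Cmul (e m) (f (m - 2 * k)%Z))). nra. }
  2: { intros a k. unfold CRmul. rewrite altsgn_add.
       replace (Cmul (Cmul (RtoC (altsgn a * altsgn k)) (e (a + k)%Z)) (f (a - k)%Z))
         with (Cmul (RtoC (altsgn a * altsgn k)) (Cmul (e (a + k)%Z) (f (a - k)%Z))) by ring.
       unfold e, f. rewrite theta_term_mul. fold p. apply Cplx_ext; simpl; ring. }
  set (A := zsum f). set (B := zsum (fun n => CRmul (altsgn n) (f n))).
  pose proof (geom_dominated_add _ _ _ _ _ (geom_dominated_scal A _ _ _ Hse)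
                (geom_dominated_scal B _ _ _ He)) as Hg.
  rewrite <- (zsum_ext _ (fun m => Cmul (CRmul (altsgn m) (e m))
                                        (zsum (fun n => CRmul (1 + altsgn m * altsgn n) (f n))))
               _ r Hg).
  2: { intro m. rewrite zsum_f_split. fold A B. unfold CRmul.
       replace (Cmul (Cmul (RtoC (altsgn m)) (e m)) (Cadd A (Cmul (RtoC (altsgn m)) B)))
         with (Cadd (Cmul A (Cmul (RtoC (altsgn m)) (e m)))
                    (Cmul (Cmul (RtoC (altsgn m)) (RtoC (altsgn m))) (Cmul B (e m)))) by ring.
       replace (Cmul (RtoC (altsgn m)) (RtoC (altsgn m))) with Cone
         by (apply Cplx_ext; unfold Cone, RtoC; simpl; rewrite ?altsgn_sqr; ring).
       ring. }
  rewrite (zsum_add _ _ _ _ _ (geom_dominated_scal A _ _ _ Hse) (geom_dominated_scal B _ _ _ He)).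
  rewrite (zsum_scal _ _ _ _ He), (zsum_scal _ _ _ _ Hse). ring.
Qed.

End ThetaDuplication.

(** * Good square roots *)

Lemma rho_le_054 T : T >= sqrt 3 / 4 -> rho T <= 0.54.
Proof.
  intro HT. pose proof PI2_3_2 as HPI.
  assert (Hs : 1.732 <= sqrt 3) by (rewrite <- (sqrt_square 1.732) by lra; apply sqrt_le_1; lra).
  set (x := PI * T / 2).
  assert (Hx : 0.6495 <= x) by (unfold x; assert (T >= 1.732 / 4) by lra; nra).
  assert (E : exp x >= 1.852).
  { replace x with (INR 8 * (x / 8)) by (simpl; field).
    rewrite <- exp_pow. pose proof (exp_ineq1_le (x / 8)).
    apply Rge_trans with ((1 + x / 8) ^ 8); [apply Rle_ge, pow_incr; lra|].
    apply Rge_trans with ((1 + 0.6495 / 8) ^ 8); [apply Rle_ge, pow_incr; lra|]. simpl. lra. }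
  unfold rho. fold x. rewrite exp_Ropp.
  apply Rle_trans with (/ 1.852); [apply Rinv_le_contravar; lra|lra].
Qed.

Lemma rho_range T : 0 < T -> T >= sqrt 3 / 4 -> 0 < rho T <= 0.54.
Proof. intros. split; [apply rho_bounds; auto|apply rho_le_054; auto]. Qed.

Definition far_tail (r : R) : R := 4 * (r ^ 3) ^ 2 / (1 - r ^ 3).

Lemma far_tail_small r : 0 < r <= 0.54 -> r + r ^ 2 + far_tail r < 1.
Proof.
  intros H. unfold far_tail. assert (H1 : r * r <= 0.2916) by nra.
  assert (H2 : r ^ 3 = r * (r * r)) by ring.
  assert (H3 : r ^ 3 <= 0.158) by (rewrite H2; nra).
  assert (H4 : 0 < r ^ 3) by (rewrite H2; apply Rmult_lt_0_compat; nra).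
  assert (4 * (r ^ 3) ^ 2 / (1 - r ^ 3) <= 4 * 0.158 * r ^ 3 / 0.842).
  { unfold Rdiv. apply Rle_trans with (4 * (r ^ 3) ^ 2 * / 0.842).
    - apply Rmult_le_compat_l; [nra|]. apply Rinv_le_contravar; lra.
    - apply Rmult_le_compat_r; [lra|]. replace ((r ^ 3) ^ 2) with (r ^ 3 * r ^ 3) by ring. nra. }
  assert (r ^ 3 <= 0.54 * 0.2916) by (rewrite H2; nra).
  replace (r ^ 2) with (r * r) by ring. lra.
Qed.

Section ThetaGood.
Variables (w tau : Cplx).
Hypothesis HT : 0 < Im tau.
Hypothesis HT2 : Im tau >= sqrt 3 / 4.
Hypothesis HY : 0 <= Im w <= Im tau / 4.

Let e := theta_term w tau.
Let r := rho (Im tau).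

Lemma rho_cube_range : 0 <= r ^ 3 < 1.
Proof.
  pose proof (rho_range _ HT HT2). fold r in H. split; [apply pow_le; lra|].
  replace (r ^ 3) with (r * (r * r)) by ring. assert (r * r < 1) by nra. nra.
Qed.

Lemma bsumR_weighted_theta_le (v : Z -> R) N : (forall n, Rabs (v n) <= 2) ->
  bsumR (fun n => Cnorm (CRmul (v n) (e n))) N
  <= bsumR (fun n => Cnorm (CRmul (v n) (e n))) 1 + far_tail r.
Proof.
  intro Hv. pose proof rho_cube_range.
  replace (far_tail r) with (2 * 2 * (r ^ 3) ^ 2 / (1 - r ^ 3)) by (unfold far_tail; field; lra).
  apply bsumR_le_center; [intro; apply Cnorm_ge0|lra|lra|].
  intros n Hn. rewrite Cnorm_CRmul. pose proof (Hv n).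
  pose proof (theta_term_far_le w tau n HT HY Hn). fold e r in H1.
  pose proof (Cnorm_ge0 (e n)). pose proof (Rabs_pos (v n)). nra.
Qed.

Lemma zsum_weighted_cv (v : Z -> R) : (forall n, Rabs (v n) <= 2) ->
  Ccv (bsum (fun n => CRmul (v n) (e n))) (zsum (fun n => CRmul (v n) (e n))).
Proof.
  intro Hv. apply (zsum_cv _ (2 * 1) r). apply geom_dominated_weight; auto; [lra|].
  apply geom_dominated_theta_term; auto.
Qed.

Lemma bsumR_1 (h : Z -> R) : bsumR h 1 = h 0%Z + h 1%Z + h (-1)%Z.
Proof. reflexivity. Qed.

Lemma theta_add_scal_zsum (s : R) :
  Cadd (theta00 w tau) (CRmul s (theta01 w tau)) = zsum (fun n => CRmul (1 + s * altsgn n) (e n)).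
Proof.
  pose proof (geom_dominated_theta_term w tau HT HY) as He. fold e r in He.
  pose proof (geom_dominated_altsgn _ _ _ He) as Hse.
  unfold theta00. rewrite theta_zsum, theta01_zsum by auto. fold e.
  unfold CRmul at 1. rewrite <- (zsum_scal _ _ _ _ Hse).
  rewrite <- (zsum_add _ _ _ _ _ He (geom_dominated_scal (RtoC s) _ _ _ Hse)).
  apply (zsum_ext _ _ _ _ (geom_dominated_add _ _ _ _ _ He (geom_dominated_scal (RtoC s) _ _ _ Hse))).
  intro n. unfold CRmul. apply Cplx_ext; simpl; ring.
Qed.

(* θ00 - θ01 = Σ (1 - (-1)^n) q_n, whose dominant terms are n = ±1. *)
Lemma theta_sub_le : Cnorm (Csub (theta00 w tau) (theta01 w tau)) <= 2 * r + 2 * r ^ 2 + far_tail r.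
Proof.
  replace (Csub (theta00 w tau) (theta01 w tau))
    with (Csub (Cadd (theta00 w tau) (CRmul (-1) (theta01 w tau))) Czero)
    by (unfold CRmul; apply Cplx_ext; simpl; ring).
  rewrite theta_add_scal_zsum.
  assert (Hv : forall n, Rabs (1 + -1 * altsgn n) <= 2)
    by (intro n; replace (1 + -1 * altsgn n) with (1 - altsgn n) by ring; apply Rabs_1_sub_altsgn).
  apply (Ccv_dist_le _ _ _ _ 0 (zsum_weighted_cv _ Hv)). intros N _.
  replace (Csub (bsum (fun n => CRmul (1 + -1 * altsgn n) (e n)) N) Czero)
    with (bsum (fun n => CRmul (1 + -1 * altsgn n) (e n)) N) by ring.
  eapply Rle_trans; [apply Cnorm_bsum_le|].
  eapply Rle_trans; [apply bsumR_weighted_theta_le; auto|].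
  rewrite bsumR_1, !Cnorm_CRmul.
  change (altsgn 0) with 1. change (altsgn 1) with (-1). change (altsgn (-1)) with (-1).
  replace (1 + -1 * 1) with 0 by ring. replace (1 + -1 * -1) with 2 by ring.
  rewrite Rabs_R0, (Rabs_pos_eq 2) by lra.
  pose proof (theta_term_1_le w tau HT HY). pose proof (theta_term_m1_le w tau HT HY).
  fold e r in H, H0. pose proof (Cnorm_ge0 (e 0%Z)). lra.
Qed.

(* θ00 + θ01 = Σ (1 + (-1)^n) q_n = 2 + (terms with |n| >= 2). *)
Lemma theta_add_near2 : Cnorm (Csub (Cadd (theta00 w tau) (theta01 w tau)) (RtoC 2)) <= far_tail r.
Proof.
  replace (Cadd (theta00 w tau) (theta01 w tau)) with (Cadd (theta00 w tau) (CRmul 1 (theta01 w tau)))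
    by (unfold CRmul; apply Cplx_ext; simpl; ring).
  rewrite theta_add_scal_zsum.
  assert (Hv : forall n, Rabs (1 + 1 * altsgn n) <= 2)
    by (intro n; rewrite Rmult_1_l; apply Rabs_1_add_altsgn).
  apply (Ccv_dist_le _ _ _ _ 0 (zsum_weighted_cv _ Hv)). intros N _.
  replace (RtoC 2) with (CRmul (1 + 1 * altsgn 0) (e 0%Z))
    by (unfold e; rewrite theta_term_0; change (altsgn 0) with 1; apply Cplx_ext; unfold CRmul, Cone, RtoC; simpl; ring).
  eapply Rle_trans; [apply Cnorm_bsum_sub0_le|].
  pose proof (bsumR_weighted_theta_le _ N Hv) as Hb. rewrite bsumR_1, !Cnorm_CRmul in Hb.
  change (altsgn 1) with (-1) in Hb. change (altsgn (-1)) with (-1) in Hb.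
  replace (1 + 1 * -1) with 0 in Hb by ring. rewrite Rabs_R0 in Hb.
  cbv beta. rewrite Cnorm_CRmul. lra.
Qed.

(* The good choice of square roots of (θ00², θ01²) is (θ00, θ01), and θ00 <> 0. *)
Lemma theta_good :
  Cnorm (Csub (theta00 w tau) (theta01 w tau)) < Cnorm (Cadd (theta00 w tau) (theta01 w tau)) /\
  theta00 w tau <> Czero.
Proof.
  pose proof theta_sub_le as Hsub. pose proof theta_add_near2 as Hadd.
  pose proof (far_tail_small r (rho_range _ HT HT2)).
  set (A := theta00 w tau) in *. set (B := theta01 w tau) in *.
  assert (Hlow : 2 - far_tail r <= Cnorm (Cadd A B)).
  { pose proof (Cnorm_triang_rev (RtoC 2) (Csub (Cadd A B) (RtoC 2))) as T.
    replace (Cadd (RtoC 2) (Csub (Cadd A B) (RtoC 2))) with (Cadd A B) in T by ring.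
    rewrite Cnorm_RtoC, Rabs_pos_eq in T by lra. lra. }
  split; [lra|].
  intro HA. assert (Cadd A B = Copp (Csub A B)) by (rewrite HA; ring).
  rewrite H0, Cnorm_opp in Hlow. lra.
Qed.

End ThetaGood.

Lemma good_pair_scaled_sqr c A B sa sb : c <> Czero -> A <> Czero ->
  Cnorm (Csub A B) < Cnorm (Cadd A B) ->
  good_pair (Cmul c (Cmul A A)) (Cmul c (Cmul B B)) sa sb -> sb = Cmul sa (Cdiv B A).
Proof.
  intros Hc HA HAB [E1 [E2 [_ G]]].
  set (zeta := Cdiv sa A).
  assert (Hz : Cmul zeta zeta = c).
  { unfold zeta. replace (Cmul (Cdiv sa A) (Cdiv sa A)) with (Cdiv (Cmul sa sa) (Cmul A A))
      by (field; auto).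
    rewrite E1. field; auto. }
  assert (Hz0 : zeta <> Czero) by (apply (Csqrt_neq0 _ _ Hz Hc)).
  assert (Hsa : sa = Cmul zeta A) by (unfold zeta; field; auto).
  assert (Hsb : Cmul sb sb = Cmul (Cmul zeta B) (Cmul zeta B)) by (rewrite E2, <- Hz; ring).
  destruct (Csqr_eq_cases _ _ Hsb) as [Hb|Hb].
  - rewrite Hb, Hsa. field; auto.
  - exfalso. rewrite Hsa, Hb in G.
    replace (Csub (Cmul zeta A) (Copp (Cmul zeta B))) with (Cmul zeta (Cadd A B)) in G by ring.
    replace (Cadd (Cmul zeta A) (Copp (Cmul zeta B))) with (Cmul zeta (Csub A B)) in G by ring.
    rewrite !Cnorm_mul in G. pose proof (Cnorm_pos _ Hz0).
    assert (Cnorm zeta * Cnorm (Csub A B) < Cnorm zeta * Cnorm (Cadd A B))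
      by (apply Rmult_lt_compat_l; auto).
    destruct G as [G|[G _]]; lra.
Qed.

Lemma good_pair_of_scaled_sqr c A B s : c <> Czero -> A <> Czero ->
  Cnorm (Csub A B) < Cnorm (Cadd A B) -> Cmul s s = Cmul c (Cmul A A) -> Re s >= 0 ->
  good_pair (Cmul c (Cmul A A)) (Cmul c (Cmul B B)) s (Cmul s (Cdiv B A)).
Proof.
  intros Hc HA HAB Hs Hre.
  assert (Hs0 : s <> Czero) by (apply (Csqrt_neq0 _ _ Hs); repeat apply Cmul_neq0; auto).
  split; auto. split.
  { replace (Cmul (Cmul s (Cdiv B A)) (Cmul s (Cdiv B A)))
      with (Cdiv (Cmul (Cmul s s) (Cmul B B)) (Cmul A A)) by (field; auto).
    rewrite Hs. field; auto. }
  split; auto. left.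
  replace (Csub s (Cmul s (Cdiv B A))) with (Cmul (Cdiv s A) (Csub A B)) by (field; auto).
  replace (Cadd s (Cmul s (Cdiv B A))) with (Cmul (Cdiv s A) (Cadd A B)) by (field; auto).
  rewrite !Cnorm_mul. apply Rmult_lt_compat_l; auto.
  rewrite Cnorm_div; auto. apply Rdiv_lt_0_compat; apply Cnorm_pos; auto.
Qed.

Lemma F_step_duplication A B A0 B0 P Q P0 Q0 sx sy sz st mu :
  A <> Czero -> A0 <> Czero ->
  Cadd (Cmul A A0) (Cmul B B0) = CRmul 2 (Cmul P P) ->
  Cadd (Cmul A B0) (Cmul B A0) = CRmul 2 (Cmul Q Q) ->
  Cadd (Cmul A0 A0) (Cmul B0 B0) = CRmul 2 (Cmul P0 P0) ->
  Cadd (Cmul A0 B0) (Cmul B0 A0) = CRmul 2 (Cmul Q0 Q0) ->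
  sy = Cmul sx (Cdiv B A) -> st = Cmul sz (Cdiv B0 A0) -> Cmul sz sz = Cmul mu (Cmul A0 A0) ->
  half (Cadd (Cmul sx sz) (Cmul sy st)) = Cmul (Cdiv (Cmul sx sz) (Cmul A A0)) (Cmul P P) /\
  half (Cadd (Cmul sx st) (Cmul sy sz)) = Cmul (Cdiv (Cmul sx sz) (Cmul A A0)) (Cmul Q Q) /\
  half (Cadd (Cmul mu (Cmul A0 A0)) (Cmul mu (Cmul B0 B0))) = Cmul mu (Cmul P0 P0) /\
  Cmul sz st = Cmul mu (Cmul Q0 Q0).
Proof.
  intros HA HA0 D1 D2 D3 D4 Ey Et Ez. pose proof RtoC_2_neq0.
  assert (HP : Cmul P P = Cdiv (Cadd (Cmul A A0) (Cmul B B0)) (RtoC 2))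
    by (rewrite D1; unfold CRmul; field; auto).
  assert (HQ : Cmul Q Q = Cdiv (Cadd (Cmul A B0) (Cmul B A0)) (RtoC 2))
    by (rewrite D2; unfold CRmul; field; auto).
  assert (HP0 : Cmul P0 P0 = Cdiv (Cadd (Cmul A0 A0) (Cmul B0 B0)) (RtoC 2))
    by (rewrite D3; unfold CRmul; field; auto).
  assert (HQ0 : Cmul Q0 Q0 = Cdiv (Cadd (Cmul A0 B0) (Cmul B0 A0)) (RtoC 2))
    by (rewrite D4; unfold CRmul; field; auto).
  unfold half. rewrite HP, HQ, HP0, HQ0, Ey, Et. repeat split; try (field; auto).
  replace (Cmul sz (Cmul sz (Cdiv B0 A0))) with (Cmul (Cmul sz sz) (Cdiv B0 A0)) by ring.
  rewrite Ez. replace (RtoC 2) with (Cadd Cone Cone) by (apply Cplx_ext; unfold Cone, RtoC; simpl; ring).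
  field. split; auto. intro E. apply H. rewrite <- E. apply Cplx_ext; unfold Cone, RtoC; simpl; ring.
Qed.

Fixpoint tau_pow2 (tau : Cplx) (n : nat) : Cplx :=
  match n with O => tau | S k => Ctwice (tau_pow2 tau k) end.

Lemma Im_tau_pow2 tau n : Im (tau_pow2 tau n) = 2 ^ n * Im tau.
Proof. induction n; simpl; [ring|]. rewrite IHn. ring. Qed.

Lemma rho_tau_pow2 tau n : rho (Im (tau_pow2 tau n)) = rho (Im tau) ^ (2 ^ n).
Proof.
  unfold rho. rewrite exp_pow, Im_tau_pow2, pow_INR.
  replace (INR 2) with 2 by (simpl; ring). f_equal. field.
Qed.

Lemma theta00_sub1_le w tau : 0 < Im tau -> 0 <= Im w <= Im tau / 4 ->
  Cnorm (Csub (theta00 w tau) Cone) <= 2 * rho (Im tau) / (1 - rho (Im tau)).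
Proof.
  intros HT HY. unfold theta00. rewrite theta_zsum by auto.
  pose proof (zsum_tail_le _ _ _ 0 (geom_dominated_theta_term w tau HT HY)) as H.
  cbn [bsum] in H. rewrite theta_term_0 in H. simpl in H. rewrite !Rmult_1_r in H. auto.
Qed.

Lemma pow2_mul_pow_pow2_le r n : 0 < r <= 1 -> (1 <= n)%nat -> 2 ^ n * r ^ (2 ^ n) <= (2 * r ^ 2) ^ n.
Proof.
  intros Hr Hn. induction Hn; [simpl; lra|].
  assert (E : (2 ^ S m = 2 ^ m + 2 ^ m)%nat) by (simpl; lia).
  rewrite E, pow_add.
  assert (r ^ (2 ^ m) <= r ^ 2).
  { apply pow_le_pow_le1; [lra|]. clear -Hn. induction Hn; simpl; lia. }
  pose proof (pow_le r (2 ^ m) ltac:(lra)). pose proof (pow_le 2 m ltac:(lra)).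
  replace (2 ^ S m * (r ^ 2 ^ m * r ^ 2 ^ m)) with (2 * (2 ^ m * r ^ 2 ^ m) * r ^ 2 ^ m)
    by (simpl; ring).
  replace ((2 * r ^ 2) ^ S m) with (2 * (2 * r ^ 2) ^ m * r ^ 2) by (simpl; ring).
  pose proof (pow_le (2 * r ^ 2) m ltac:(nra)).
  apply Rmult_le_compat; nra.
Qed.

(** * The F sequence at theta values *)

Section FSequence.
Variables z tau lam mu : Cplx.
Hypothesis HT : Im tau > 0.
Hypothesis HT2 : Im tau >= sqrt 3 / 4.
Hypothesis HY : 0 <= Im z <= Im tau / 4.
Hypothesis Hlam : lam <> Czero.
Hypothesis Hmu : mu <> Czero.

Let A n := theta00 z (tau_pow2 tau n).
Let B n := theta01 z (tau_pow2 tau n).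
Let A0 n := theta00 Czero (tau_pow2 tau n).
Let B0 n := theta01 Czero (tau_pow2 tau n).

Lemma Im_range_tau_pow2 w n : 0 <= Im w <= Im tau / 4 -> 0 <= Im w <= Im (tau_pow2 tau n) / 4.
Proof. rewrite Im_tau_pow2. assert (1 <= 2 ^ n) by (apply pow_R1_Rle; lra). nra. Qed.

Lemma tau_pow2_hyps n : 0 < Im (tau_pow2 tau n) /\ Im (tau_pow2 tau n) >= sqrt 3 / 4 /\
  0 <= Im z <= Im (tau_pow2 tau n) / 4 /\ 0 <= Im Czero <= Im (tau_pow2 tau n) / 4.
Proof.
  rewrite Im_tau_pow2. assert (1 <= 2 ^ n) by (apply pow_R1_Rle; lra).
  unfold Czero, RtoC; simpl Im. repeat split; nra.
Qed.

Lemma theta_good_z n : Cnorm (Csub (A n) (B n)) < Cnorm (Cadd (A n) (B n)) /\ A n <> Czero.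
Proof. destruct (tau_pow2_hyps n) as [? [? [? ?]]]. apply theta_good; auto. Qed.

Lemma theta_good_0 n : Cnorm (Csub (A0 n) (B0 n)) < Cnorm (Cadd (A0 n) (B0 n)) /\ A0 n <> Czero.
Proof. destruct (tau_pow2_hyps n) as [? [? [? ?]]]. apply theta_good; auto. Qed.

Lemma F_step_theta n sx sy sz st c : c <> Czero ->
  good_pair (Cmul c (Cmul (A n) (A n))) (Cmul c (Cmul (B n) (B n))) sx sy ->
  good_pair (Cmul mu (Cmul (A0 n) (A0 n))) (Cmul mu (Cmul (B0 n) (B0 n))) sz st ->
  half (Cadd (Cmul sx sz) (Cmul sy st))
    = Cmul (Cdiv (Cmul sx sz) (Cmul (A n) (A0 n))) (Cmul (A (S n)) (A (S n))) /\
  half (Cadd (Cmul sx st) (Cmul sy sz))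
    = Cmul (Cdiv (Cmul sx sz) (Cmul (A n) (A0 n))) (Cmul (B (S n)) (B (S n))) /\
  half (Cadd (Cmul mu (Cmul (A0 n) (A0 n))) (Cmul mu (Cmul (B0 n) (B0 n))))
    = Cmul mu (Cmul (A0 (S n)) (A0 (S n))) /\
  Cmul sz st = Cmul mu (Cmul (B0 (S n)) (B0 (S n))).
Proof.
  intros Hc G1 G2.
  destruct (theta_good_z n) as [GA HA]. destruct (theta_good_0 n) as [GA0 HA0].
  destruct (tau_pow2_hyps n) as [Hn [_ [Hz H0]]].
  apply (F_step_duplication (A n) (B n) (A0 n) (B0 n)); auto.
  - exact (theta00_duplication z _ Hn Hz).
  - exact (theta01_duplication z _ Hn Hz).
  - exact (theta00_duplication Czero _ Hn H0).
  - exact (theta01_duplication Czero _ Hn H0).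
  - exact (good_pair_scaled_sqr _ _ _ _ _ Hc HA GA G1).
  - exact (good_pair_scaled_sqr _ _ _ _ _ Hmu HA0 GA0 G2).
  - apply G2.
Qed.

(* At step n the point has the shape of the initial one for 2ⁿτ, with [c] in place of λ. *)
Definition theta_shape (x y zz t : nat -> Cplx) n c : Prop :=
  c <> Czero /\ Cmul (Cpow c (2 ^ n)) mu = Cmul lam (Cpow mu (2 ^ n)) /\
  x n = Cmul c (Cmul (A n) (A n)) /\ y n = Cmul c (Cmul (B n) (B n)) /\
  zz n = Cmul mu (Cmul (A0 n) (A0 n)) /\ t n = Cmul mu (Cmul (B0 n) (B0 n)).

Lemma theta_shape_step x y zz t n c : theta_shape x y zz t n c ->
  good_step (x n) (y n) (zz n) (t n) (x (S n)) (y (S n)) (zz (S n)) (t (S n)) ->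
  exists c', theta_shape x y zz t (S n) c'.
Proof.
  intros [Hc [Hp [Hx [Hy [Hz Ht]]]]] [sx [sy [sz [st [G1 [G2 [Ex' [Ey' [Ez' Et']]]]]]]]].
  rewrite Hx, Hy in G1. rewrite Hz, Ht in G2.
  destruct (F_step_theta n _ _ _ _ _ Hc G1 G2) as [X1 [X2 [X3 X4]]].
  destruct (theta_good_z n) as [_ HA]. destruct (theta_good_0 n) as [_ HA0].
  set (c' := Cdiv (Cmul sx sz) (Cmul (A n) (A0 n))) in *.
  assert (Hcc : Cmul c' c' = Cmul c mu).
  { destruct G1 as [Sx _]. destruct G2 as [Sz _].
    unfold c'. replace (Cmul (Cdiv (Cmul sx sz) (Cmul (A n) (A0 n))) (Cdiv (Cmul sx sz) (Cmul (A n) (A0 n))))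
      with (Cdiv (Cmul (Cmul sx sx) (Cmul sz sz)) (Cmul (Cmul (A n) (A n)) (Cmul (A0 n) (A0 n))))
      by (field; auto).
    rewrite Sx, Sz. field. auto. }
  exists c'. repeat split.
  - apply (Csqrt_neq0 _ _ Hcc). apply Cmul_neq0; auto.
  - rewrite Nat.pow_succ_r', <- Cpow_pow, Cpow_2, Hcc, Cpow_mul.
    replace (Cmul (Cmul (Cpow c (2 ^ n)) (Cpow mu (2 ^ n))) mu)
      with (Cmul (Cmul (Cpow c (2 ^ n)) mu) (Cpow mu (2 ^ n))) by ring.
    rewrite Hp, <- Cpow_pow, Cpow_2, Cpow_mul. ring.
  - rewrite Ex'. exact X1.
  - rewrite Ey'. exact X2.
  - rewrite Ez', Hz, Ht. exact X3.
  - rewrite Et'. exact X4.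
Qed.


Lemma good_F_seq_theta_shape x y zz t :
  good_F_seq (Cmul lam (Cpow (theta00 z tau) 2)) (Cmul lam (Cpow (theta01 z tau) 2))
             (Cmul mu (Cpow (theta00 Czero tau) 2)) (Cmul mu (Cpow (theta01 Czero tau) 2)) x y zz t ->
  forall n, exists c, theta_shape x y zz t n c.
Proof.
  intros [E0 [E1 [E2 [E3 Hs]]]] n. induction n.
  - exists lam. unfold theta_shape. rewrite E0, E1, E2, E3, !Cpow_2. repeat split; auto. simpl. ring.
  - destruct IHn as [c Hc]. exact (theta_shape_step _ _ _ _ _ _ Hc (Hs n)).
Qed.

Lemma theta00_tau_pow2_sub1_le w n : 0 <= Im w <= Im tau / 4 ->
  Cnorm (Csub (theta00 w (tau_pow2 tau n)) Cone) <= 5 * rho (Im tau) ^ (2 ^ n).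
Proof.
  intro Hw. destruct (tau_pow2_hyps n) as [Hn _].
  pose proof (theta00_sub1_le w _ Hn (Im_range_tau_pow2 w n Hw)) as H. rewrite rho_tau_pow2 in H.
  pose proof (rho_range _ HT HT2) as [r0 r1]. set (r := rho (Im tau)) in *.
  assert (r ^ (2 ^ n) <= r).
  { rewrite <- (pow_1 r) at 2. apply pow_le_pow_le1; [lra|]. pose proof (Nat.pow_nonzero 2 n). lia. }
  pose proof (pow_le r (2 ^ n) ltac:(lra)).
  eapply Rle_trans; [apply H|]. apply Rmult_le_reg_r with (1 - r ^ (2 ^ n)); [lra|].
  unfold Rdiv. rewrite Rmult_assoc, Rinv_l by lra. nra.
Qed.

Lemma theta_shape_z_cv x y zz t : (forall n, exists c, theta_shape x y zz t n c) -> Ccv zz mu.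
Proof.
  intro HI. pose proof (rho_range _ HT HT2) as [r0 r1]. set (r := rho (Im tau)) in *.
  apply (Ccv_ext (fun n => Cmul mu (Cpow (A0 n) 2))).
  { intro n. destruct (HI n) as [c [_ [_ [_ [_ [Hz _]]]]]]. rewrite Hz, Cpow_2. auto. }
  apply Ccv_scal_Cone.
  apply (Ccv_Cpow_Cone _ _ (fun n => 10 * r ^ n)); [apply Un_cv_geom; lra|].
  intros n _. simpl INR.
  pose proof (theta00_tau_pow2_sub1_le Czero n ltac:(unfold Czero, RtoC; simpl; lra)) as H.
  assert (r ^ (2 ^ n) <= r ^ n).
  { apply pow_le_pow_le1; [lra|]. apply Nat.lt_le_incl, Nat.pow_gt_lin_r; lia. }
  fold r in H. unfold A0. lra.
Qed.

(* [(x_n/μ)^(2ⁿ) = (λ/μ) θ00(z, 2ⁿτ)^(2ⁿ⁺¹)], and [2ⁿ⁺¹ |θ00(z, 2ⁿτ) - 1|] still tends to 0. *)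
Lemma theta_shape_x_cv x y zz t : (forall n, exists c, theta_shape x y zz t n c) ->
  Ccv (fun n => Cpow (Cdiv (x n) mu) (2 ^ n)) (Cdiv lam mu).
Proof.
  intro HI. pose proof (rho_range _ HT HT2) as [r0 r1]. set (r := rho (Im tau)) in *.
  apply (Ccv_ext (fun n => Cmul (Cdiv lam mu) (Cpow (A n) (2 ^ S n)))).
  { intro n. destruct (HI n) as [c [Hc [Hp [Hx _]]]]. rewrite Hx.
    set (K := (2 ^ n)%nat) in *.
    replace (Cdiv (Cmul c (Cmul (A n) (A n))) mu) with (Cmul (Cmul c (Cinv mu)) (Cpow (A n) 2))
      by (unfold Cdiv; rewrite Cpow_2; ring).
    rewrite Cpow_mul, Cpow_pow, Cpow_mul.
    assert (Hck : Cmul (Cpow c K) (Cpow (Cinv mu) K) = Cdiv lam mu).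
    { replace (Cmul (Cpow c K) (Cpow (Cinv mu) K))
        with (Cdiv (Cmul (Cmul (Cpow c K) mu) (Cpow (Cinv mu) K)) mu) by (field; auto).
      rewrite Hp, <- Cplx_ring.(Rmul_assoc), <- Cpow_mul.
      replace (Cmul mu (Cinv mu)) with Cone by (field; auto). rewrite Cpow_Cone. field. auto. }
    rewrite Hck. unfold K. rewrite Nat.pow_succ_r'. reflexivity. }
  apply Ccv_scal_Cone.
  apply (Ccv_Cpow_Cone _ _ (fun n => 10 * (2 * r ^ 2) ^ n)).
  { apply Un_cv_geom. split; [nra|]. assert (r * r <= 0.2916) by nra. simpl. lra. }
  intros n Hn. pose proof (theta00_tau_pow2_sub1_le z n HY) as H. fold r in H.
  rewrite pow_INR. replace (INR 2) with 2 by (simpl; ring).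
  pose proof (pow2_mul_pow_pow2_le r n ltac:(lra) Hn).
  pose proof (Cnorm_ge0 (Csub (A n) Cone)). pose proof (pow_le 2 n ltac:(lra)).
  replace (2 ^ S n) with (2 * 2 ^ n) by (simpl; ring).
  apply Rle_trans with (2 * 2 ^ n * (5 * r ^ 2 ^ n)); [apply Rmult_le_compat_l; unfold A; nra|nra].
Qed.

Fixpoint theta_scale (n : nat) : Cplx :=
  match n with
  | O => lam
  | S k => Cdiv (Cmul (Csqrt (Cmul (theta_scale k) (Cmul (A k) (A k))))
                      (Csqrt (Cmul mu (Cmul (A0 k) (A0 k)))))
                (Cmul (A k) (A0 k))
  end.

Lemma theta_scale_neq0 n : theta_scale n <> Czero.
Proof.
  induction n; simpl; auto.
  destruct (theta_good_z n) as [_ HA]. destruct (theta_good_0 n) as [_ HA0].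
  unfold Cdiv. repeat apply Cmul_neq0.
  - apply (Csqrt_neq0 _ _ (Csqrt_sqr _)). repeat apply Cmul_neq0; auto.
  - apply (Csqrt_neq0 _ _ (Csqrt_sqr _)). repeat apply Cmul_neq0; auto.
  - apply Cinv_neq0, Cmul_neq0; auto.
Qed.

Lemma good_F_seq_theta_exists : exists x y zz t : nat -> Cplx,
  good_F_seq (Cmul lam (Cpow (theta00 z tau) 2)) (Cmul lam (Cpow (theta01 z tau) 2))
             (Cmul mu (Cpow (theta00 Czero tau) 2)) (Cmul mu (Cpow (theta01 Czero tau) 2)) x y zz t.
Proof.
  exists (fun n => Cmul (theta_scale n) (Cmul (A n) (A n))),
         (fun n => Cmul (theta_scale n) (Cmul (B n) (B n))),
         (fun n => Cmul mu (Cmul (A0 n) (A0 n))), (fun n => Cmul mu (Cmul (B0 n) (B0 n))).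
  cbn [theta_scale]. rewrite !Cpow_2. repeat split. intro n.
  destruct (theta_good_z n) as [GA HA]. destruct (theta_good_0 n) as [GA0 HA0].
  set (sx := Csqrt (Cmul (theta_scale n) (Cmul (A n) (A n)))).
  set (sz := Csqrt (Cmul mu (Cmul (A0 n) (A0 n)))).
  pose proof (good_pair_of_scaled_sqr _ _ (B n) sx (theta_scale_neq0 n) HA GA
                (Csqrt_sqr _) (Csqrt_Re_ge0 _)) as G1.
  pose proof (good_pair_of_scaled_sqr _ _ (B0 n) sz Hmu HA0 GA0 (Csqrt_sqr _) (Csqrt_Re_ge0 _)) as G2.
  destruct (F_step_theta n _ _ _ _ _ (theta_scale_neq0 n) G1 G2) as [X1 [X2 [X3 X4]]].
  exists sx, (Cmul sx (Cdiv (B n) (A n))), sz, (Cmul sz (Cdiv (B0 n) (A0 n))).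
  split; [exact G1|]. split; [exact G2|]. repeat split; symmetry; assumption.
Qed.

Theorem Finf_eq_theta :
  Finf_eq (Cmul lam (Cpow (theta00 z tau) 2)) (Cmul lam (Cpow (theta01 z tau) 2))
          (Cmul mu (Cpow (theta00 Czero tau) 2)) (Cmul mu (Cpow (theta01 Czero tau) 2))
          lam mu.
Proof.
  split; [apply good_F_seq_theta_exists|]. intros x y zz t HF.
  pose proof (good_F_seq_theta_shape x y zz t HF) as HI.
  exists mu, (Cdiv lam mu). repeat split; auto.
  - exact (theta_shape_z_cv x y zz t HI).
  - exact (theta_shape_x_cv x y zz t HI).
  - field. auto.
Qed.

End FSequence.

Theorem mainTheorem10 (tau z lam mu : Cplx)
  (Htau : Im tau > 0) (Htau2 : Im tau >= sqrt 3 / 4)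
  (Hz1 : 0 <= Im z) (Hz2 : Im z <= Im tau / 4)
  (Hlam : lam <> Czero) (Hmu : mu <> Czero) :
  Finf_eq (Cmul lam (Cpow (theta00 z tau) 2)) (Cmul lam (Cpow (theta01 z tau) 2))
          (Cmul mu (Cpow (theta00 Czero tau) 2)) (Cmul mu (Cpow (theta01 Czero tau) 2))
          lam mu
  /\
  Finf_eq Cone (Cdiv (Cpow (theta01 z tau) 2) (Cpow (theta00 z tau) 2))
          Cone (Cdiv (Cpow (theta01 Czero tau) 2) (Cpow (theta00 Czero tau) 2))
          (Cinv (Cpow (theta00 z tau) 2)) (Cinv (Cpow (theta00 Czero tau) 2)).
Proof.
  assert (HY : 0 <= Im z <= Im tau / 4) by lra.
  assert (HY0 : 0 <= Im Czero <= Im tau / 4) by (unfold Czero, RtoC; simpl; lra).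
  split; [exact (Finf_eq_theta z tau lam mu Htau Htau2 HY Hlam Hmu)|].
  set (a := Cpow (theta00 z tau) 2). set (a0 := Cpow (theta00 Czero tau) 2).
  assert (Ha : a <> Czero) by (apply Cpow_neq0, (theta_good z tau Htau Htau2 HY)).
  assert (Ha0 : a0 <> Czero) by (apply Cpow_neq0, (theta_good Czero tau Htau Htau2 HY0)).
  pose proof (Finf_eq_theta z tau _ _ Htau Htau2 HY (Cinv_neq0 _ Ha) (Cinv_neq0 _ Ha0)) as P.
  fold a a0 in P.
  replace (Cmul (Cinv a) a) with Cone in P by (field; auto).
  replace (Cmul (Cinv a0) a0) with Cone in P by (field; auto).
  unfold Cdiv. rewrite !(Cplx_ring.(Rmul_comm) _ (Cinv _)). exact P.
Qed.
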